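(* For every word $x$ there exists at most one densely non-increasing sequence $(u_\beta)_{\beta<\alpha}$ of prime words such that $x=\prod_{\beta<\alpha}u_\beta$.
   Context: $A$ is a finite alphabet with a linear order $<_A$. Words are sequences of letters indexed by countable ordinals; $\prod$ is ordered concatenation and $x^\alpha$ the concatenation of $\alpha$ copies of $x$. A suffix of $x$ is $x[\gamma,|x|)$, proper if $0<\gamma<|x|$. Write $x<_{str}x'$ if there are letters $a<_Ab$ and words $y,z,z'$ with $x=yaz$, $x'=ybz'$; $x\le_{lex}x'$ iff $x$ is a prefix of $x'$ or $x<_{str}x'$. A word is primitive if $x=y^\alpha$ implies $\alpha=1$ and $y=x$; $w$ is prime if it is primitive and every proper suffix $z$ satisfies $w\le_{lex}z$. A sequence $(u_\beta)_{\beta<\alpha}$ of words is densely non-increasing if for all $\gamma<\gamma'\le\alpha$, either $u_\beta=u_\gamma$ for all $\gamma\le\beta<\gamma'$, or there exist $\gamma\le\beta<\beta'<\gamma'$ with $u_\beta>_{lex}u_{\beta'}$. *)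

From mathcomp Require Import all_boot all_order.
Set Implicit Arguments. Unset Strict Implicit. Unset Printing Implicit Defensive.
Import Order.TTheory.
Local Open Scope order_scope.

(* Transfinite words are represented concretely: a word is an index type
   with a strict order and a labelling; the predicates below say that the
   order is a well-order (i.e. the length is an ordinal). Words are compared
   up to label-preserving order isomorphism ([weq]), which is the identity of
   words "indexed by ordinals". *)

Definition well_order (T : Type) (r : T -> T -> Prop) : Prop :=
  (forall a, ~ r a a) /\
  (forall a b c, r a b -> r b c -> r a c) /\
  (forall a b, r a b \/ a = b \/ r b a) /\
  well_founded r.

Record ord := Ord { oc :> Type; olt : oc -> oc -> Prop }.
Definition is_ordinal (J : ord) : Prop := well_order (@olt J).
Definition ord_eq (J K : ord) (f : J -> K) : Prop :=
  (exists g : K -> J, (forall j, g (f j) = j) /\ (forall k, f (g k) = k)) /\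
  (forall a b, olt a b <-> olt (f a) (f b)).
Definition is_one (J : ord) : Prop := exists t : J, forall s : J, s = t.

Section Words.
Context {disp : Order.disp_t} {A : finOrderType disp}.

Record word := Word { idx : Type; ltw : idx -> idx -> Prop; lab : idx -> A }.

Definition is_word (w : word) : Prop := well_order (@ltw w).
Definition countable_word (w : word) : Prop :=
  exists f : idx w -> nat, forall a b, f a = f b -> a = b.

Definition weq (x y : word) : Prop :=
  exists f : idx x -> idx y,
    (exists g : idx y -> idx x, (forall i, g (f i) = i) /\ (forall j, f (g j) = j)) /\
    (forall a b, ltw a b <-> ltw (f a) (f b)) /\
    (forall a, lab (f a) = lab a).

Definition wprod (J : ord) (u : J -> word) : word :=
  @Word {j : J & idx (u j)}
    (fun p q => olt (projT1 p) (projT1 q) \/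
       exists h : projT1 p = projT1 q,
         ltw (eq_rect _ (fun j => idx (u j)) (projT2 p) _ h) (projT2 q))
    (fun p => lab (projT2 p)).

Definition wpow (y : word) (J : ord) : word := wprod (fun _ : J => y).

Definition wcat (x y : word) : word :=
  @Word (idx x + idx y)%type
    (fun p q => match p, q with
                | inl a, inl b => ltw a b
                | inr a, inr b => ltw a b
                | inl _, inr _ => True
                | inr _, inl _ => False end)
    (fun p => match p with inl a => lab a | inr b => lab b end).
Definition wletter (a : A) : word := @Word unit (fun _ _ => False) (fun _ => a).

Definition wsuffix (x : word) (g : idx x) : word :=
  @Word {i : idx x | ~ ltw i g} (fun p q => ltw (proj1_sig p) (proj1_sig q))
    (fun p => lab (proj1_sig p)).
(* g is a proper position: 0 < g (g < |x| holds as g is a position) *)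
Definition proper_pos (x : word) (g : idx x) : Prop := exists d, ltw d g.

Definition str_lt (x x' : word) : Prop :=
  exists (y z z' : word) (a b : A),
    [/\ is_word y, is_word z, is_word z', a < b /\
        weq x (wcat y (wcat (wletter a) z)) &
        weq x' (wcat y (wcat (wletter b) z'))].

Definition wprefix (x x' : word) : Prop :=
  exists z : word, is_word z /\ weq x' (wcat x z).

Definition le_lex (x x' : word) : Prop := wprefix x x' \/ str_lt x x'.
Definition lt_lex (x x' : word) : Prop := le_lex x x' /\ ~ weq x x'.

Definition primitive (x : word) : Prop :=
  forall (y : word) (J : ord), is_word y -> is_ordinal J ->
    weq x (wpow y J) -> is_one J /\ weq y x.

Definition prime_word (w : word) : Prop :=
  primitive w /\ forall g : idx w, proper_pos g -> le_lex w (wsuffix g).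

(* densely non-increasing sequence (u_b)_{b < J}; the upper bound g' ranges
   over J and J itself (encoded as None) *)
Definition below (J : ord) (g' : option J) (b : J) : Prop :=
  match g' with Some g => olt b g | None => True end.

Definition dense_nonincr (J : ord) (u : J -> word) : Prop :=
  forall (g : J) (g' : option J), below g' g ->
    (forall b, ~ olt b g -> below g' b -> weq (u b) (u g)) \/
    (exists b b', [/\ ~ olt b g, olt b b', below g' b' & lt_lex (u b') (u b)]).

Definition seq_eq (J K : ord) (u : J -> word) (v : K -> word) : Prop :=
  exists f : J -> K, ord_eq f /\ forall j, weq (u j) (v (f j)).

End Words.

(* Both factorizations decompose the same well-ordered word, so an isomorphism [phi]
   transports the blocks of one onto positions of the other; it suffices to show, by
   well-founded induction along the word, that [phi] sends block starts to block starts.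
   At the first block start [p] whose image is not one, the prime block [v_k] containing
   [phi p] begins at the image of an earlier block start [u_i] and reaches past it.
   Among [u_i] and the later blocks inside [v_k], take one isomorphic to the shortest
   prefix of [u_i]; dense non-increase makes all later blocks equal to it.  Then either
   [v_k] is a proper power, contradicting primitivity, or comparing [v_k] with one of its
   suffixes contradicts primality.  Once block starts correspond, [phi] induces an order
   isomorphism of the index ordinals and isomorphisms of the blocks. *)

From mathcomp Require Import all_boot all_order.
From Stdlib Require Import Classical ClassicalEpsilon ProofIrrelevance Eqdep Wellfounded.
Set Implicit Arguments. Unset Strict Implicit.
Import Order.TTheory.

Lemma wf_minimal (T : Type) (R : T -> T -> Prop) : well_founded R ->
  forall Q : T -> Prop, (exists x, Q x) -> exists x, Q x /\ forall y, R y x -> ~ Q y.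
Proof.
  intros Hwf Q [x Hx]. apply NNPP; intros Hn.
  have Hall : forall z, ~ Q z.
  { intros z; induction (Hwf z) as [z _ IH]. intros Hz. apply Hn. exists z; split; auto. }
  exact (Hall x Hx).
Qed.

Section WellOrder.
Variables (T : Type) (r : T -> T -> Prop).
Hypothesis Hr : well_order r.

Lemma wo_irr (a : T) : ~ r a a.
Proof. by case: Hr. Qed.
Lemma wo_trans (a b c : T) : r a b -> r b c -> r a c.
Proof. by case: Hr => _ [? _]; eauto. Qed.
Lemma wo_total (a b : T) : r a b \/ a = b \/ r b a.
Proof. by case: Hr => _ [_ [? _]]. Qed.
Lemma wo_wf : well_founded r.
Proof. by case: Hr => _ [_ [_ ?]]. Qed.
Lemma wo_asym (a b : T) : r a b -> ~ r b a.
Proof. intros H H'. exact (wo_irr (wo_trans H H')). Qed.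

End WellOrder.

Section IsoOn.
Context {disp : Order.disp_t} {A : finOrderType disp}.
Local Notation word := (@word disp A).

Definition iso_on (a b : word) (SA : idx a -> Prop) (SB : idx b -> Prop) (f : idx a -> idx b) : Prop :=
  (forall x, SA x -> SB (f x)) /\
  (forall y, SB y -> exists x, SA x /\ f x = y) /\
  (forall x y, SA x -> SA y -> (ltw x y <-> ltw (f x) (f y))) /\
  (forall x, SA x -> lab (f x) = lab x).

Lemma iso_on_into (a b : word) SA SB f : @iso_on a b SA SB f -> forall x, SA x -> SB (f x).
Proof. by case. Qed.
Lemma iso_on_onto (a b : word) SA SB f : @iso_on a b SA SB f ->
  forall y, SB y -> exists x, SA x /\ f x = y.
Proof. by case=> _ []. Qed.
Lemma iso_on_lt (a b : word) SA SB f : @iso_on a b SA SB f ->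
  forall x y, SA x -> SA y -> (ltw x y <-> ltw (f x) (f y)).
Proof. by case=> _ [_ []]. Qed.
Lemma iso_on_lab (a b : word) SA SB f : @iso_on a b SA SB f -> forall x, SA x -> lab (f x) = lab x.
Proof. by case=> _ [_ []]. Qed.

End IsoOn.

Arguments iso_on_into {disp A a b SA SB f} _ x _.
Arguments iso_on_onto {disp A a b SA SB f} _ y _.
Arguments iso_on_lt {disp A a b SA SB f} _ x y _ _.
Arguments iso_on_lab {disp A a b SA SB f} _ x _.

Section PartialIsoTheory.
Context {disp : Order.disp_t} {A : finOrderType disp}.
Local Notation word := (@word disp A).

Definition initial_in (b : word) (B C : idx b -> Prop) : Prop :=
  forall y y', B y -> C y' -> ltw y' y -> B y'.

Lemma iso_on_inj (a b : word) SA SB f : is_word a -> is_word b -> iso_on (a:=a) (b:=b) SA SB f ->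
  forall x y, SA x -> SA y -> f x = f y -> x = y.
Proof.
  intros Ha Hb [_ [_ [Ho _]]] x y Hx Hy E.
  destruct (wo_total Ha x y) as [H|[H|H]]; auto.
  - apply (proj1 (Ho _ _ Hx Hy)) in H. rewrite E in H. exfalso; exact (wo_irr Hb H).
  - apply (proj1 (Ho _ _ Hy Hx)) in H. rewrite E in H. exfalso; exact (wo_irr Hb H).
Qed.

Lemma iso_on_comp (a b c : word) SA SB SC f g :
  iso_on (a:=a) (b:=b) SA SB f -> iso_on (a:=b) (b:=c) SB SC g ->
  iso_on SA SC (fun x => g (f x)).
Proof.
  intros [F1 [F2 [F3 F4]]] [G1 [G2 [G3 G4]]]. split; [|split; [|split]].
  - intros x Hx; auto.
  - intros z Hz. destruct (G2 z Hz) as [y [Hy E]]. destruct (F2 y Hy) as [x [Hx E']].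
    exists x; split; auto. rewrite E'; auto.
  - intros x y Hx Hy. rewrite (F3 x y Hx Hy). apply G3; auto.
  - intros x Hx. rewrite (G4 _ (F1 _ Hx)). auto.
Qed.

Lemma iso_on_id (a : word) S : iso_on (a:=a) (b:=a) S S (fun x => x).
Proof. split; [|split; [|split]]; intros; try tauto. eexists; eauto. Qed.

Lemma iso_on_ext (a b : word) SA SB SA' SB' f : iso_on (a:=a) (b:=b) SA SB f ->
  (forall x, SA' x <-> SA x) -> (forall y, SB' y <-> SB y) -> iso_on SA' SB' f.
Proof.
  intros [F1 [F2 [F3 F4]]] E1 E2. split; [|split; [|split]].
  - intros x Hx. apply E2, F1, E1, Hx.
  - intros y Hy. destruct (F2 y (proj1 (E2 y) Hy)) as [x [Hx E]]. exists x; split; auto. apply E1; auto.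
  - intros x y Hx Hy. apply F3; apply E1; auto.
  - intros x Hx. apply F4, E1, Hx.
Qed.

Lemma iso_on_restr (a b : word) SA SB SA' f :
  iso_on (a:=a) (b:=b) SA SB f -> (forall x, SA' x -> SA x) ->
  iso_on SA' (fun y => exists x, SA' x /\ f x = y) f.
Proof.
  intros [F1 [F2 [F3 F4]]] Hs. split; [|split; [|split]].
  - intros x Hx. exists x; auto.
  - intros y [x [Hx E]]. exists x; auto.
  - intros x y Hx Hy. apply F3; auto.
  - intros x Hx; auto.
Qed.

Lemma iso_on_below (a b : word) SA SB f p : iso_on (a:=a) (b:=b) SA SB f -> SA p ->
  iso_on (fun x => SA x /\ ltw x p) (fun y => SB y /\ ltw y (f p)) f.
Proof.
  intros [F1 [F2 [F3 F4]]] Hp. split; [|split; [|split]].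
  - intros x [Hx Hl]. split; auto. apply F3; auto.
  - intros y [Hy Hl]. destruct (F2 y Hy) as [x [Hx E]]. exists x; split; auto. split; auto.
    apply (F3 x p Hx Hp). rewrite E; auto.
  - intros x y [Hx _] [Hy _]; auto.
  - intros x [Hx _]; auto.
Qed.

Lemma iso_on_initial_eq (a b : word) SA B1 B2 C f g : is_word a -> is_word b ->
  iso_on (a:=a) (b:=b) SA B1 f -> iso_on (a:=a) (b:=b) SA B2 g ->
  (forall y, B1 y -> C y) -> (forall y, B2 y -> C y) -> initial_in B1 C -> initial_in B2 C ->
  forall x, SA x -> f x = g x.
Proof.
  intros Ha Hb [F1 [F2 [F3 F4]]] [G1 [G2 [G3 G4]]] S1 S2 D1 D2 x.
  induction (wo_wf Ha x) as [x _ IH]. intros Hx.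
  destruct (wo_total Hb (f x) (g x)) as [H|[H|H]]; auto; exfalso.
  - have Hb2 : B2 (f x) by eapply D2; eauto.
    destruct (G2 _ Hb2) as [y [Hy E]].
    have Hyx : ltw y x by apply (G3 y x Hy Hx); rewrite E.
    pose proof (IH y Hyx Hy) as E2. rewrite <- E2 in E.
    apply (F3 y x Hy Hx) in Hyx. rewrite E in Hyx. exact (wo_irr Hb Hyx).
  - have Hb1 : B1 (g x) by eapply D1; eauto.
    destruct (F2 _ Hb1) as [y [Hy E]].
    have Hyx : ltw y x by apply (F3 y x Hy Hx); rewrite E.
    pose proof (IH y Hyx Hy) as E2. rewrite E2 in E.
    apply (G3 y x Hy Hx) in Hyx. rewrite E in Hyx. exact (wo_irr Hb Hyx).
Qed.

Lemma iso_on_initial_sub (a b : word) SA B1 B2 C f g : is_word a -> is_word b ->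
  iso_on (a:=a) (b:=b) SA B1 f -> iso_on (a:=a) (b:=b) SA B2 g ->
  (forall y, B1 y -> C y) -> (forall y, B2 y -> C y) -> initial_in B1 C -> initial_in B2 C ->
  forall y, B1 y -> B2 y.
Proof.
  intros Ha Hb Hf Hg S1 S2 D1 D2 y Hy.
  destruct Hf as [F1 [F2 F3]]. destruct (F2 y Hy) as [x [Hx E]].
  rewrite <- E. rewrite (@iso_on_initial_eq a b SA B1 B2 C f g); auto.
  - apply (proj1 Hg); auto.
  - split; auto.
Qed.

Lemma initial_in_below (b : word) (C : idx b -> Prop) q : is_word b ->
  initial_in (fun y => C y /\ ltw y q) C.
Proof. intros Hb y y' [Hy Hl] Hy' Hl'. split; auto. eapply wo_trans; eauto. Qed.

Lemma initial_in_refl (b : word) (C : idx b -> Prop) : initial_in C C.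
Proof. intros y y' _ H _; auto. Qed.

Lemma iso_on_below_eq (a b : word) SA (C : idx b -> Prop) q1 q2 f g : is_word a -> is_word b ->
  iso_on (a:=a) (b:=b) SA (fun y => C y /\ ltw y q1) f ->
  iso_on (a:=a) (b:=b) SA (fun y => C y /\ ltw y q2) g ->
  C q1 -> C q2 -> q1 = q2.
Proof.
  intros Ha Hb Hf Hg C1 C2.
  have I12 := @iso_on_initial_sub a b SA _ _ C f g Ha Hb Hf Hg.
  have I21 := @iso_on_initial_sub a b SA _ _ C g f Ha Hb Hg Hf.
  destruct (wo_total Hb q1 q2) as [H|[H|H]]; auto; exfalso.
  - have D := initial_in_below (C:=C) (q:=q2) Hb.
    destruct (I21 (fun y H => proj1 H) (fun y H => proj1 H) D (initial_in_below Hb) q1) as [_ H'];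
      [by split|exact (wo_irr Hb H')].
  - have D := initial_in_below (C:=C) (q:=q1) Hb.
    destruct (I12 (fun y H => proj1 H) (fun y H => proj1 H) D (initial_in_below Hb) q2) as [_ H'];
      [by split|exact (wo_irr Hb H')].
Qed.

Definition img (a b : word) (f : idx a -> idx b) (S : idx a -> Prop) : idx b -> Prop :=
  fun y => exists x, S x /\ f x = y.

Lemma initial_in_trans (b : word) (B1 B2 B3 : idx b -> Prop) :
  initial_in B1 B2 -> initial_in B2 B3 -> (forall y, B1 y -> B2 y) -> initial_in B1 B3.
Proof. intros D1 D2 S y y' H1 H3 Hl. eapply D1; eauto. Qed.

Lemma initial_in_img (a b : word) (SA : idx a -> Prop) (SB : idx b -> Prop) F (f : idx a -> idx b) :
  iso_on SA SB f ->
  (forall x, F x -> SA x) -> initial_in F SA -> initial_in (img f F) SB.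
Proof.
  intros [F1 [F2 [F3 F4]]] S D y y' [x [Hx E]] Hy' Hl.
  destruct (F2 y' Hy') as [x' [Hx' E']]. exists x'; split; auto.
  apply (D x x'); auto. apply (F3 x' x Hx' (S x Hx)). rewrite E E'; auto.
Qed.

Lemma iso_on_initial_full (X : word) (W B : idx X -> Prop) g : is_word X ->
  iso_on W B g -> (forall y, B y -> W y) -> initial_in B W -> forall y, W y -> B y.
Proof.
  intros HX Hg S D.
  exact (@iso_on_initial_sub X X W W B W (fun x => x) g HX HX (iso_on_id W) Hg (fun _ H => H) S
    (initial_in_refl (C:=W)) D).
Qed.

Lemma initial_below_iff (X : word) (W B : idx X -> Prop) q :
  (forall y, B y -> W y) -> initial_in B W -> B q ->
  forall y, (B y /\ ltw y q) <-> (W y /\ ltw y q).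
Proof. intros S D Hq y; split; intros [H1 H2]; split; eauto. Qed.

Lemma below_below_iff (X : word) (S : idx X -> Prop) q r : is_word X -> ltw q r ->
  forall y, ((S y /\ ltw y r) /\ ltw y q) <-> (S y /\ ltw y q).
Proof. intros HX Hqr y; split; [tauto|]. intros [H1 H2]; repeat split; auto. eapply wo_trans; eauto. Qed.

Lemma iso_on_above (a b : word) SA SB f x : is_word a -> iso_on (a:=a) (b:=b) SA SB f -> SA x ->
  iso_on (fun y => SA y /\ ~ ltw y x) (fun z => SB z /\ ~ ltw z (f x)) f.
Proof.
  intros Ha Hf Hx. split; [|split; [|split]].
  - intros y [Hy Hyx]. split; [exact (iso_on_into Hf y Hy)|].
    by rewrite -(iso_on_lt Hf y x Hy Hx).
  - intros z [Hz Hzx]. destruct (iso_on_onto Hf z Hz) as [y [Hy <-]].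
    exists y. split; [split; [exact Hy|]|done]. by rewrite (iso_on_lt Hf y x Hy Hx).
  - intros y y' [Hy _] [Hy' _]. exact (iso_on_lt Hf y y' Hy Hy').
  - intros y [Hy _]. exact (iso_on_lab Hf y Hy).
Qed.

Lemma iso_on_empty (a b : word) SA SB (f : idx a -> idx b) :
  (forall x, ~ SA x) -> (forall y, ~ SB y) -> iso_on SA SB f.
Proof.
  intros EA EB. split; [|split; [|split]].
  - intros x Hx. case: (EA x Hx).
  - intros y Hy. case: (EB y Hy).
  - intros x y Hx. case: (EA x Hx).
  - intros x Hx. case: (EA x Hx).
Qed.

Definition full (a : word) : idx a -> Prop := fun _ => True.
Arguments full {a}.

Lemma iso_on_wsuffix (w : word) (g : idx w) :
  iso_on (a:=wsuffix g) (b:=w) full (fun y => full y /\ ~ ltw y g) (@proj1_sig _ _).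
Proof.
  split; [|split; [|split]].
  - intros [y Hy] _. by split.
  - intros y [_ Hy]. by exists (exist _ y Hy).
  - done.
  - done.
Qed.

Lemma initial_in_cases (X : word) (F T : idx X -> Prop) : is_word X ->
  (forall y, F y -> T y) -> initial_in F T ->
  (forall y, F y <-> T y) \/ exists p, T p /\ forall y, F y <-> (T y /\ ltw y p).
Proof.
  intros HX SF DF.
  destruct (classic (exists r, T r /\ ~ F r)) as [Hex|Hall]; [right|left].
  - destruct (wf_minimal (wo_wf HX) Hex) as [p [[Tp Fp] Hm]].
    exists p. split; [exact Tp|]. intros y. split.
    + intros Fy. split; [exact (SF _ Fy)|]. destruct (wo_total HX y p) as [H|[<-|H]]; [done|done|].
      case: Fp. exact (DF y p Fy Tp H).
    + intros [Ty Hy]. apply NNPP. intros Fy. exact (Hm y Hy (conj Ty Fy)).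
  - intros y. split; [exact (SF y)|]. intros Ty. apply NNPP. intros Fy. apply Hall. by exists y.
Qed.

Definition below_cut (W : word) (o : option (idx W)) (p : idx W) : Prop :=
  match o with Some q => ltw p q | None => True end.

Definition cut_lt (W : word) (o o' : option (idx W)) : Prop :=
  match o, o' with Some a, Some b => ltw a b | Some _, None => True | None, _ => False end.

Lemma cut_lt_wf (W : word) : is_word W -> well_founded (@cut_lt W).
Proof.
  intros HW.
  have HS : forall a, Acc (@cut_lt W) (Some a).
  { intros a. induction (wo_wf HW a) as [a _ IH].
    constructor. intros [b|] H; [apply IH; exact H| destruct H]. }
  intros [a|]; auto. constructor. intros [b|] H; [apply HS | destruct H].
Qed.

Lemma cut_lt_Some (W : word) (x : idx W) o : cut_lt (Some x) o <-> below_cut o x.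
Proof. destruct o; simpl; tauto. Qed.

End PartialIsoTheory.

Arguments full {disp A a} _.

Section WordEquality.
Context {disp : Order.disp_t} {A : finOrderType disp}.
Local Notation word := (@word disp A).

Lemma iso_on_inj_weq (a b : word) f : iso_on (a:=a) (b:=b) full full f ->
  (forall x y, f x = f y -> x = y) -> weq a b.
Proof.
  intros Hs Inj. pose proof Hs as [F1 [F2 [F3 F4]]]. unfold full in *.
  have C : forall y, {x | f x = y}.
  { intros y. apply constructive_indefinite_description. destruct (F2 y I) as [x [_ E]]. eauto. }
  exists f. split; [|split].
  - exists (fun y => proj1_sig (C y)). split.
    + intros x. apply Inj. exact (proj2_sig (C (f x))).
    + intros y. exact (proj2_sig (C y)).
  - intros x y. apply F3; auto.
  - intros x. apply F4; auto.
Qed.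

Lemma iso_on_weq (a b : word) f : is_word a -> is_word b ->
  iso_on (a:=a) (b:=b) full full f -> weq a b.
Proof. intros Ha Hb Hs. apply (iso_on_inj_weq Hs). intros x y. exact (iso_on_inj Ha Hb Hs I I). Qed.

Lemma weq_iso_pair (a b : word) : weq a b -> exists phi phi',
  iso_on (a:=a) (b:=b) full full phi /\ iso_on (a:=b) (b:=a) full full phi' /\
  (forall x, phi' (phi x) = x) /\ (forall y, phi (phi' y) = y).
Proof.
  intros [f [[g [Hgf Hfg]] [Ho Hl]]]. exists f, g. split; [|split; [|split; [exact Hgf|exact Hfg]]].
  - split; [|split; [|split]]; [done| |done|done].
    intros y _. exists (g y). by split.
  - split; [|split; [|split]]; [done| | |].
    + intros x _. exists (f x). by split.
    + intros y y' _ _. by rewrite (Ho (g y) (g y')) !Hfg.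
    + intros y _. by rewrite -(Hl (g y)) Hfg.
Qed.

Lemma weq_iso_on (a b : word) : weq a b -> exists f, iso_on (a:=a) (b:=b) full full f.
Proof. intros E. destruct (weq_iso_pair E) as [f [_ [Hf _]]]. by exists f. Qed.

Lemma weq_refl (a : word) : weq a a.
Proof. exists (fun x => x). split; [|split]; [exists (fun x => x)|..]; tauto. Qed.

Lemma weq_sym (a b : word) : weq a b -> weq b a.
Proof.
  intros [f [[g [Hgf Hfg]] [Ho Hl]]]. exists g. split; [|split].
  - exists f; auto.
  - intros x y. rewrite (Ho (g x) (g y)) !Hfg. tauto.
  - intros y. rewrite <- (Hl (g y)), Hfg. auto.
Qed.

Lemma weq_trans (a b c : word) : weq a b -> weq b c -> weq a c.
Proof.
  intros [f [[g [Hgf Hfg]] [Ho Hl]]] [f' [[g' [Hgf' Hfg']] [Ho' Hl']]].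
  exists (fun x => f' (f x)). split; [|split].
  - exists (fun z => g (g' z)). split; intros; [rewrite Hgf' Hgf | rewrite Hfg Hfg']; auto.
  - intros x y. rewrite Ho Ho'. tauto.
  - intros x. rewrite Hl' Hl. auto.
Qed.

Lemma is_word_weq (a b : word) : weq a b -> is_word a -> is_word b.
Proof.
  intros [f [[g [Hgf Hfg]] [Ho Hl]]] [Hi [Ht [Htr Hwf]]].
  have Ho' : forall y y', ltw y y' <-> ltw (g y) (g y').
  { intros y y'. rewrite (Ho (g y) (g y')) !Hfg. tauto. }
  split; [|split; [|split]].
  - intros y H. apply Ho' in H. exact (Hi _ H).
  - intros y1 y2 y3 H1 H2. apply Ho' in H1; apply Ho' in H2. apply Ho'. eauto.
  - intros y y'. destruct (Htr (g y) (g y')) as [H|[H|H]].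
    + left; apply Ho'; auto.
    + right; left. rewrite <- (Hfg y), <- (Hfg y'), H. auto.
    + right; right; apply Ho'; auto.
  - apply (wf_incl _ _ (fun y y' => ltw (g y) (g y'))).
    + intros y y' H; apply Ho'; auto.
    + apply wf_inverse_image. exact Hwf.
Qed.

Lemma lt_lex_weq_r (a b c : word) : lt_lex a b -> weq b c -> lt_lex a c.
Proof.
  intros [[[z [Hz E]] | [y [z [z' [a0 [b0 [Hy Hz Hz' [Hab Ea] Eb]]]]]]] Hn] Ebc.
  - split.
    + left. exists z. split; auto. eapply weq_trans; [apply weq_sym; exact Ebc | exact E].
    + intros Hac. apply Hn. eapply weq_trans; [exact Hac | apply weq_sym; exact Ebc].
  - split.
    + right. exists y, z, z', a0, b0. split; auto. eapply weq_trans; [apply weq_sym; exact Ebc | exact Eb].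
    + intros Hac. apply Hn. eapply weq_trans; [exact Hac | apply weq_sym; exact Ebc].
Qed.

End WordEquality.

Section Comparison.
Context {disp : Order.disp_t} {A : finOrderType disp}.
Local Notation word := (@word disp A).

(* Lexicographic comparisons of the subwords of [a] and [b] carried by the position sets
   [SA] and [SB]; [prefix_in SA SB] says that [SA] is isomorphic to an initial part of [SB]. *)
Definition prefix_in (a b : word) (SA : idx a -> Prop) (SB : idx b -> Prop) : Prop :=
  exists f B', iso_on SA B' f /\ (forall y, B' y -> SB y) /\ initial_in B' SB.
Definition strlt_in (a b : word) (SA : idx a -> Prop) (SB : idx b -> Prop) : Prop :=
  exists p q f, SA p /\ SB q /\
    iso_on (fun x => SA x /\ ltw x p) (fun y => SB y /\ ltw y q) f /\ (lab p < lab q)%O.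
Definition pprefix_in (a b : word) (SA : idx a -> Prop) (SB : idx b -> Prop) : Prop :=
  exists q f, SB q /\ iso_on SA (fun y => SB y /\ ltw y q) f.
Definition lelex_in (a b : word) (SA : idx a -> Prop) (SB : idx b -> Prop) : Prop :=
  prefix_in SA SB \/ strlt_in SA SB.

Section WithinWord.
Variable X : word.
Hypothesis HX : is_word X.

Lemma prefix_in_iso (Z B : idx X -> Prop) f : iso_on Z B f -> prefix_in Z B.
Proof. intros H. exists f, B. split; [exact H|split; [auto|apply initial_in_refl]]. Qed.

Lemma prefix_in_initial (Z B : idx X -> Prop) :
  (forall y, Z y -> B y) -> initial_in Z B -> prefix_in Z B.
Proof. intros S D. exists (fun x => x), Z. split; [apply iso_on_id|split; auto]. Qed.

Lemma prefix_in_initial_r (Z B1 B2 : idx X -> Prop) :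
  prefix_in Z B1 -> (forall y, B1 y -> B2 y) -> initial_in B1 B2 -> prefix_in Z B2.
Proof.
  intros [f [B' [Hf [S D]]]] S12 D12. exists f, B'. split; [exact Hf|split; auto].
  eapply initial_in_trans; eauto.
Qed.

Lemma strlt_in_initial_l (Z Z' C : idx X -> Prop) :
  strlt_in Z C -> (forall y, Z y -> Z' y) -> initial_in Z Z' -> strlt_in Z' C.
Proof.
  intros [p [q [g [Zp [Cq [Hg Hl]]]]]] S D. exists p, q, g. do 2 (split; [auto|]). split; [|auto].
  eapply iso_on_ext; [exact Hg | | tauto]. intros y; symmetry; apply initial_below_iff; auto.
Qed.

Lemma strlt_in_initial_r (Z B1 B2 : idx X -> Prop) :
  strlt_in Z B1 -> (forall y, B1 y -> B2 y) -> initial_in B1 B2 -> strlt_in Z B2.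
Proof.
  intros [p [q [g [Zp [Cq [Hg Hl]]]]]] S D. exists p, q, g. do 2 (split; [auto|]). split; [|auto].
  eapply iso_on_ext; [exact Hg | tauto | ]. intros y; symmetry; apply initial_below_iff; auto.
Qed.

Lemma prefix_in_trans (Z B C : idx X -> Prop) : prefix_in Z B -> prefix_in B C -> prefix_in Z C.
Proof.
  intros [f [F' [Hf [SF DF]]]] [h [H' [Hh [SH DH]]]].
  exists (fun x => h (f x)), (img h F'). split; [|split].
  - exact (iso_on_comp Hf (iso_on_restr Hh SF)).
  - intros y [x [Hx E]]. apply SH. rewrite <- E. apply (iso_on_into Hh); auto.
  - apply (initial_in_trans (B2 := H')); auto.
    + apply (initial_in_img Hh SF DF).
    + intros y [x [Hx E]]. rewrite <- E. apply (iso_on_into Hh); auto.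
Qed.

Lemma strlt_prefix_in_trans (Z B C : idx X -> Prop) : strlt_in Z B -> prefix_in B C -> strlt_in Z C.
Proof.
  intros [p [q [g [Zp [Bq [Hg Hl]]]]]] [h [H' [Hh [SH DH]]]].
  have Hq : H' (h q) := iso_on_into Hh q Bq.
  exists p, (h q), (fun x => h (g x)). do 2 (split; [auto|]). split.
  - eapply iso_on_ext; [exact (iso_on_comp Hg (iso_on_below Hh Bq)) | tauto |].
    intros y; symmetry; apply initial_below_iff; auto.
  - rewrite (iso_on_lab Hh q Bq). exact Hl.
Qed.

Lemma prefix_strlt_in (Z B C : idx X -> Prop) : prefix_in Z B -> strlt_in B C ->
  strlt_in Z C \/ exists q, C q /\ prefix_in Z (fun y => C y /\ ltw y q).
Proof.
  intros [f [F' [Hf [SF DF]]]] [p [q [g [Bp [Cq [Hg Hl]]]]]].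
  destruct (classic (F' p)) as [Fp|Fp].
  - left. destruct (iso_on_onto Hf p Fp) as [x [Zx E]].
    have Hf1 := iso_on_below Hf Zx. rewrite E in Hf1.
    have Hf2 : iso_on (fun y => Z y /\ ltw y x) (fun y => B y /\ ltw y p) f.
    { eapply iso_on_ext; [exact Hf1 | tauto |]. intros y. symmetry. apply initial_below_iff; auto. }
    exists x, q, (fun y => g (f y)). do 2 (split; [auto|]). split.
    + exact (iso_on_comp Hf2 Hg).
    + rewrite -(iso_on_lab Hf x Zx) E. exact Hl.
  - right. exists q. split; [exact Cq|].
    have SF2 : forall y, F' y -> B y /\ ltw y p.
    { intros y Fy. split; auto. destruct (wo_total HX y p) as [H|[H|H]]; auto.
      - subst; contradiction.
      - exfalso; apply Fp. apply (DF y p); auto. }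
    exists (fun x => g (f x)), (img g F'). split; [|split].
    + exact (iso_on_comp Hf (iso_on_restr Hg SF2)).
    + intros y [x [Hx E]]. rewrite <- E. apply (iso_on_into Hg); auto.
    + apply (initial_in_img Hg SF2). intros y y' Fy [Zy' _] Hl'. apply (DF y y'); auto.
Qed.

Lemma strlt_in_trans (Z B C : idx X -> Prop) : strlt_in Z B -> strlt_in B C -> strlt_in Z C.
Proof.
  intros [p1 [p1' [g1 [Zp1 [Bp1' [Hg1 Hlab1]]]]]] [p [p0 [g [Bp [Cp0 [Hg Hlab]]]]]].
  destruct (wo_total HX p1' p) as [H|[H|H]].
  - have Bq : B p1' /\ ltw p1' p by auto.
    have Cg : C (g p1') /\ ltw (g p1') p0 := iso_on_into Hg p1' Bq.
    have Hgl : iso_on (fun y => B y /\ ltw y p1') (fun y => C y /\ ltw y (g p1')) g.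
    { eapply iso_on_ext; [exact (iso_on_below Hg Bq) | |];
        intros y; symmetry; apply below_below_iff; tauto. }
    exists p1, (g p1'), (fun x => g (g1 x)). split; [exact Zp1|split; [|split]].
    + exact (proj1 Cg).
    + exact (iso_on_comp Hg1 Hgl).
    + by rewrite (iso_on_lab Hg p1' Bq).
  - subst p1'. exists p1, p0, (fun x => g (g1 x)). split; [exact Zp1|split; [exact Cp0|split]].
    + exact (iso_on_comp Hg1 Hg).
    + exact (lt_trans Hlab1 Hlab).
  - destruct (iso_on_onto Hg1 p (conj Bp H)) as [x [Zx E]].
    have Hgl := iso_on_below Hg1 Zx. rewrite E in Hgl.
    have Hgl' : iso_on (fun y => Z y /\ ltw y x) (fun y => B y /\ ltw y p) g1.
    { eapply iso_on_ext; [exact Hgl | |]; intros y; symmetry; apply below_below_iff; tauto. }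
    exists x, p0, (fun y => g (g1 y)). split; [exact (proj1 Zx)|split; [exact Cp0|split]].
    + exact (iso_on_comp Hgl' Hg).
    + by rewrite -(iso_on_lab Hg1 x Zx) E.
Qed.

Lemma strlt_in_irr (W : idx X -> Prop) : ~ strlt_in W W.
Proof.
  intros [p [q [g [Wp [Wq [Hg Hlab]]]]]].
  have E : p = q := iso_on_below_eq HX HX (iso_on_id (fun x => W x /\ ltw x p)) Hg Wp Wq.
  by rewrite E ltxx in Hlab.
Qed.

(* A well-order is not isomorphic to a proper initial segment of itself. *)
Lemma prefix_in_proper_contra (W B : idx X -> Prop) : prefix_in W B ->
  (forall y, B y -> W y) -> initial_in B W -> (exists r, W r /\ ~ B r) -> False.
Proof.
  intros [f [F' [Hf [SF DF]]]] SB DB [r [Wr Br]].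
  have SF' : forall y, F' y -> W y by auto.
  have DF' : initial_in F' W := initial_in_trans DF DB SF.
  exact (Br (SF _ (iso_on_initial_full HX Hf SF' DF' Wr))).
Qed.

Lemma lelex_prefix_proper_contra (W Z B : idx X -> Prop) : lelex_in W Z -> prefix_in Z B ->
  (forall y, B y -> W y) -> initial_in B W -> (exists r, W r /\ ~ B r) -> False.
Proof.
  intros [HWZ|HWZ] HZB SB DB Hr.
  - exact (prefix_in_proper_contra (prefix_in_trans HWZ HZB) SB DB Hr).
  - exact (strlt_in_irr (strlt_in_initial_r (strlt_prefix_in_trans HWZ HZB) SB DB)).
Qed.

Lemma lelex_strlt_prefix_contra (W Z B : idx X -> Prop) : lelex_in W Z -> strlt_in Z B ->
  (forall y, B y -> W y) -> initial_in B W -> False.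
Proof.
  intros [HWZ|HWZ] HZB SB DB; have HZW := strlt_in_initial_r HZB SB DB.
  - destruct (prefix_strlt_in HWZ HZW) as [HWW|[q [Wq HWq]]]; [exact (strlt_in_irr HWW)|].
    apply (prefix_in_proper_contra HWq); [tauto | apply initial_in_below; exact HX |].
    exists q. split; [exact Wq|]. intros [_ H]. exact (wo_irr HX H).
  - exact (strlt_in_irr (strlt_in_trans HWZ HZW)).
Qed.

(* The identity serves as default value off [SA'], so no inhabitant of [a] is needed. *)
Lemma iso_on_conj (a b : word) SA SB (SA' SB' : idx X -> Prop) fa f fb : is_word a ->
  iso_on SA SA' fa -> iso_on (a:=a) (b:=b) SA SB f -> iso_on SB SB' fb ->
  exists h, iso_on SA' SB' h /\ forall x, SA x -> h (fa x) = fb (f x).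
Proof.
  intros Ha Hfa Hf Hfb.
  have C : forall x, {y | SA' x -> exists z, SA z /\ fa z = x /\ fb (f z) = y}.
  { intros x. apply constructive_indefinite_description.
    destruct (classic (SA' x)) as [Hx|Hx]; [|exists x; tauto].
    destruct (iso_on_onto Hfa x Hx) as [z [Hz E]]. exists (fb (f z)). eauto. }
  have Hh : forall z, SA z -> proj1_sig (C (fa z)) = fb (f z).
  { intros z Hz. destruct (C (fa z)) as [y Hy]; simpl.
    destruct (Hy (iso_on_into Hfa z Hz)) as [z' [Hz' [E <-]]].
    by rewrite (iso_on_inj Ha HX Hfa Hz' Hz E). }
  exists (fun x => proj1_sig (C x)). split; [|exact Hh].
  have Hc := iso_on_comp Hf Hfb.
  split; [|split; [|split]].
  - intros x Hx. destruct (iso_on_onto Hfa x Hx) as [z [Hz <-]].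
    rewrite (Hh z Hz). exact (iso_on_into Hc z Hz).
  - intros y Hy. destruct (iso_on_onto Hc y Hy) as [z [Hz <-]].
    exists (fa z). split; [exact (iso_on_into Hfa z Hz)|exact (Hh z Hz)].
  - intros x x' Hx Hx'.
    destruct (iso_on_onto Hfa x Hx) as [z [Hz <-]]. destruct (iso_on_onto Hfa x' Hx') as [z' [Hz' <-]].
    rewrite (Hh z Hz) (Hh z' Hz') -(iso_on_lt Hfa z z' Hz Hz'). exact (iso_on_lt Hc z z' Hz Hz').
  - intros x Hx. destruct (iso_on_onto Hfa x Hx) as [z [Hz <-]].
    rewrite (Hh z Hz) (iso_on_lab Hc z Hz). exact (esym (iso_on_lab Hfa z Hz)).
Qed.

Lemma prefix_in_transport (a b : word) SA SB (SA' SB' : idx X -> Prop) fa fb : is_word a ->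
  @prefix_in a b SA SB -> iso_on SA SA' fa -> iso_on SB SB' fb -> prefix_in SA' SB'.
Proof.
  intros Ha [f [B0 [Hf [S0 D0]]]] Hfa Hfb.
  destruct (iso_on_conj Ha Hfa Hf (iso_on_restr Hfb S0)) as [h [Hh _]].
  exists h, (img fb B0). split; [exact Hh|split].
  - intros y [x [Hx <-]]. exact (iso_on_into Hfb x (S0 x Hx)).
  - exact (initial_in_img Hfb S0 D0).
Qed.

Lemma strlt_in_transport (a b : word) SA SB (SA' SB' : idx X -> Prop) fa fb : is_word a ->
  @strlt_in a b SA SB -> iso_on SA SA' fa -> iso_on SB SB' fb -> strlt_in SA' SB'.
Proof.
  intros Ha [p [q [g [Ap [Bq [Hg Hl]]]]]] Hfa Hfb.
  destruct (iso_on_conj Ha (iso_on_below Hfa Ap) Hg (iso_on_below Hfb Bq)) as [h [Hh _]].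
  exists (fa p), (fb q), h. split; [|split; [|split]].
  - exact (iso_on_into Hfa p Ap).
  - exact (iso_on_into Hfb q Bq).
  - exact Hh.
  - by rewrite (iso_on_lab Hfa p Ap) (iso_on_lab Hfb q Bq).
Qed.

Lemma pprefix_in_transport (a b : word) SA SB (SA' SB' : idx X -> Prop) fa fb : is_word a ->
  @pprefix_in a b SA SB -> iso_on SA SA' fa -> iso_on SB SB' fb -> pprefix_in SA' SB'.
Proof.
  intros Ha [q [f [Bq Hf]]] Hfa Hfb.
  destruct (iso_on_conj Ha Hfa Hf (iso_on_below Hfb Bq)) as [h [Hh _]].
  exists (fb q), h. split; [exact (iso_on_into Hfb q Bq)|exact Hh].
Qed.

End WithinWord.

Lemma prefix_in_wprefix (a b : word) : wprefix a b -> @prefix_in a b full full.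
Proof.
  intros [z [Hz [F [[G [GF FG]] [Ho Hl]]]]].
  exists (fun x => G (inl x)), (fun y => exists x, F y = inl x). split; [|split].
  - split; [|split; [|split]].
    + intros x _. exists x. rewrite FG; auto.
    + intros y [x E]. exists x. split; [exact I|]. rewrite <- E, GF. auto.
    + intros x x' _ _. rewrite (Ho (G (inl x)) (G (inl x'))) !FG. simpl. tauto.
    + intros x _. rewrite <- (Hl (G (inl x))), FG. auto.
  - intros; exact I.
  - intros y y' [x E] _ H. apply Ho in H. rewrite E in H.
    destruct (F y') as [x'|z'] eqn:E'.
    + exists x'; auto.
    + simpl in H. destruct H.
Qed.

Lemma strlt_in_str_lt (a b : word) : str_lt a b -> @strlt_in a b full full.
Proof.
  intros [y [z [z' [a0 [b0 [Hy Hz Hz' [Hab [Fa [[Ga [GFa FGa]] [Hoa Hla]]]]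
     [Fb [[Gb [GFb FGb]] [Hob Hlb]]]]]]]]].
  set (pa := Ga (inr (inl tt))). set (pb := Gb (inr (inl tt))).
  have La : forall x, ltw x pa <-> exists y0, Fa x = inl y0.
  { intros x. unfold pa. rewrite (Hoa x) FGa. destruct (Fa x) as [y0|[[]|z0]]; simpl.
    - split; eauto.
    - split; [intros []| intros [? E]; discriminate].
    - split; [intros []| intros [? E]; discriminate]. }
  have Lb : forall x, ltw x pb <-> exists y0, Fb x = inl y0.
  { intros x. unfold pb. rewrite (Hob x) FGb. destruct (Fb x) as [y0|[[]|z0]]; simpl.
    - split; eauto.
    - split; [intros []| intros [? E]; discriminate].
    - split; [intros []| intros [? E]; discriminate]. }
  exists pa, pb, (fun x => match Fa x with inl y0 => Gb (inl y0) | inr _ => pb end).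
  split; [exact I|split; [exact I|split]].
  - split; [|split; [|split]].
    + intros x [_ Hx]. apply La in Hx. destruct Hx as [y0 E]. rewrite E. split; [exact I|].
      apply Lb. exists y0. rewrite FGb; auto.
    + intros y' [_ Hy']. apply Lb in Hy'. destruct Hy' as [y0 E].
      exists (Ga (inl y0)). split. { split; [exact I|]. apply La. exists y0. rewrite FGa; auto. }
      rewrite FGa. rewrite <- E, GFb. auto.
    + intros x x' [_ Hx] [_ Hx']. apply La in Hx; apply La in Hx'.
      destruct Hx as [y0 E]; destruct Hx' as [y0' E']. rewrite E E'.
      rewrite (Hoa x x') (Hob (Gb (inl y0)) (Gb (inl y0'))) E E' !FGb. simpl. tauto.
    + intros x [_ Hx]. apply La in Hx. destruct Hx as [y0 E]. rewrite E.
      rewrite <- (Hlb (Gb (inl y0))), FGb, <- (Hla x), E. auto.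
  - unfold pa, pb. rewrite <- (Hla (Ga _)), <- (Hlb (Gb _)), FGa, FGb. simpl. exact Hab.
Qed.

Lemma pprefix_in_proper_wprefix (a b : word) : is_word a -> is_word b ->
  wprefix a b -> ~ weq a b -> @pprefix_in a b full full.
Proof.
  intros Ha Hb [z [Hz [F [[G [GF FG]] [Ho Hl]]]]] Hn.
  destruct (classic (inhabited (idx z))) as [[z0]|Hi].
  - destruct (@wf_minimal _ _ (wo_wf Hz) (fun z1 => True) (ex_intro _ z0 I)) as [zm [_ Hm]].
    exists (G (inr zm)), (fun x => G (inl x)). split; [exact I|].
    split; [|split; [|split]].
    + intros x _. split; [exact I|]. apply Ho. rewrite !FG. simpl. exact I.
    + intros y [_ Hy]. apply Ho in Hy. rewrite FG in Hy. destruct (F y) as [x|z1] eqn:E.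
      * exists x. split; [exact I|]. rewrite <- E, GF. auto.
      * simpl in Hy. exfalso. apply (Hm z1 Hy I).
    + intros x x' _ _. rewrite (Ho (G (inl x)) (G (inl x'))) !FG. simpl. tauto.
    + intros x _. rewrite <- (Hl (G (inl x))), FG. auto.
  - exfalso. apply Hn. apply (iso_on_weq (f := fun x => G (inl x)) Ha Hb).
    split; [|split; [|split]]; unfold full.
    + auto.
    + intros y _. destruct (F y) as [x|z1] eqn:E.
      * exists x. split; auto. rewrite <- E, GF. auto.
      * exfalso; apply Hi; constructor; exact z1.
    + intros x x' _ _. rewrite (Ho (G (inl x)) (G (inl x'))) !FG. simpl. tauto.
    + intros x _. rewrite <- (Hl (G (inl x))), FG. auto.
Qed.

Lemma lelex_in_le_lex (a b : word) : le_lex a b -> @lelex_in a b full full.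
Proof. intros [H|H]; [left; apply prefix_in_wprefix | right; apply strlt_in_str_lt]; auto. Qed.

Lemma lt_lex_in_cases (a b : word) : is_word a -> is_word b -> lt_lex a b ->
  @pprefix_in a b full full \/ @strlt_in a b full full.
Proof.
  intros Ha Hb [[H|H] Hn]; [left; apply pprefix_in_proper_wprefix | right; apply strlt_in_str_lt]; auto.
Qed.

End Comparison.

Section Products.
Context {disp : Order.disp_t} {A : finOrderType disp}.
Local Notation word := (@word disp A).

Definition subord (J : ord) (G : J -> Prop) : ord :=
  @Ord {j : J | G j} (fun a b => olt (proj1_sig a) (proj1_sig b)).

Lemma is_ordinal_subord (J : ord) (G : J -> Prop) : is_ordinal J -> is_ordinal (subord G).
Proof.
  intros [Hirr [Htr [Htri Hwf]]]. split; [|split; [|split]].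
  - intros [j Hj]; simpl. apply Hirr.
  - intros [i Hi] [j Hj] [k Hk]; simpl. apply Htr.
  - intros [i Hi] [j Hj]; simpl. destruct (Htri i j) as [H|[H|H]]; auto.
    right; left. subst. f_equal. apply proof_irrelevance.
  - apply (wf_inverse_image _ _ (@olt J) (fun a : {j : J | G j} => proj1_sig a)). exact Hwf.
Qed.

Lemma wprod_lt_same (J : ord) (u : J -> word) (Hirr : forall j : J, ~ olt j j) (j : J) (a b : idx (u j)) :
  ltw (w:=wprod u) (existT _ j a) (existT _ j b) <-> ltw a b.
Proof.
  simpl. split.
  - intros [H|[h H]]. { exfalso; exact (Hirr _ H). }
    rewrite (Eqdep.EqdepTheory.UIP_refl _ _ h) in H. exact H.
  - intros H. right. exists (erefl j). exact H.
Qed.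

Lemma wprod_lt_diff (J : ord) (u : J -> word) (p q : idx (wprod u)) :
  projT1 p <> projT1 q -> (ltw p q <-> olt (projT1 p) (projT1 q)).
Proof.
  intros Hn. simpl. split; [intros [H|[h _]]|intros H; left]; auto. contradiction.
Qed.

Lemma ord_succ_bound (J : ord) (j : J) : is_ordinal J ->
  exists g' : option J, forall b, below g' b <-> ~ olt j b.
Proof.
  intros HJ. destruct (classic (exists k, olt j k)) as [Hk|Hk].
  - destruct (@wf_minimal _ _ (wo_wf HJ) _ Hk) as [k0 [Hk0 Hm]].
    exists (Some k0). intros b; simpl. split.
    + intros Hb Hjb. exact (Hm b Hb Hjb).
    + intros Hb. destruct (wo_total HJ b j) as [H|[->|H]]; [exact (wo_trans HJ H Hk0)|done|contradiction].
  - exists None. intros b; simpl. split; [|done]. intros _ H. apply Hk; eauto.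
Qed.

Definition ord_two : ord := @Ord bool (fun a b => a = false /\ b = true).

Lemma is_ordinal_two : is_ordinal ord_two.
Proof.
  split; [|split; [|split]]; simpl.
  - intros a [H1 H2]. congruence.
  - intros a b c [H1 H2] [H3 H4]. congruence.
  - intros [] []; auto.
  - intros a. destruct a; constructor; intros [] [H1 H2]; try discriminate;
      constructor; intros [] [H3 H4]; discriminate.
Qed.

(* The empty word equals its own square, so it is not primitive. *)
Lemma prime_word_inhabited (w : word) : is_word w -> prime_word w -> inhabited (idx w).
Proof.
  intros Hw [Hpr _]. apply NNPP. intros Hn.
  have E : weq w (wpow w ord_two).
  { exists (fun x => False_rect _ (Hn (inhabits x))). split; [|split].
    - exists (fun y => False_rect _ (Hn (inhabits (projT2 y)))). split; intros x; exfalso.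
      + apply Hn; constructor; exact x.
      + apply Hn; constructor; exact (projT2 x).
    - intros x; exfalso; apply Hn; constructor; exact x.
    - intros x; exfalso; apply Hn; constructor; exact x. }
  destruct (Hpr w ord_two Hw is_ordinal_two E) as [[t Ht] _].
  have H1 := Ht true. have H2 := Ht false. congruence.
Qed.

End Products.

Section Blocks.
Context {disp : Order.disp_t} {A : finOrderType disp}.
Local Notation word := (@word disp A).
Variable J : ord.
Variable u : J -> word.
Hypothesis HJ : is_ordinal J.
Hypothesis Hu : forall j, is_word (u j).
Hypothesis Hne : forall j, inhabited (idx (u j)).
Hypothesis HX : is_word (wprod u).
Hypothesis Hd : dense_nonincr u.

Local Notation X := (wprod u).

Lemma wprod_lt_block (p q : idx X) : ltw p q -> olt (projT1 p) (projT1 q) \/ projT1 p = projT1 q.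
Proof. simpl. intros [H|[h _]]; auto. Qed.

Lemma wprod_lt_olt (p q : idx X) : olt (projT1 p) (projT1 q) -> ltw p q.
Proof. intros H. simpl. left; auto. Qed.

Lemma block_has_min (j : J) : exists a : idx (u j), forall b, ~ ltw b a.
Proof.
  destruct (Hne j) as [a0].
  destruct (@wf_minimal _ _ (wo_wf (Hu j)) (fun _ => True) (ex_intro _ a0 I)) as [a [_ H]].
  exists a. intros b Hb. exact (H b Hb I).
Qed.

Definition block_min (j : J) : idx (u j) :=
  proj1_sig (constructive_indefinite_description _ (block_has_min j)).
Lemma block_min_least (j : J) (b : idx (u j)) : ~ ltw b (block_min j).
Proof. rewrite /block_min. case: (constructive_indefinite_description _ _) => a Ha. apply Ha. Qed.

Definition bstart (j : J) : idx X := existT _ j (block_min j).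
Definition inblock (j : J) : idx X -> Prop := fun p => projT1 p = j.

Lemma bstart_least (j : J) (p : idx X) : inblock j p -> ~ ltw p (bstart j).
Proof.
  destruct p as [k a]. unfold inblock; simpl. intros E. subst k. intros H.
  apply (wprod_lt_same (u:=u) (wo_irr HJ) a (block_min j)) in H. exact (block_min_least H).
Qed.

Lemma iso_on_block (j : J) : iso_on (a:=u j) (b:=X) full (inblock j) (fun a => existT _ j a).
Proof.
  split; [|split; [|split]].
  - intros x _. reflexivity.
  - intros [k b] E. unfold inblock in E; simpl in E. subst k. exists b. split; [exact I|auto].
  - intros x y _ _. symmetry. exact (wprod_lt_same (u:=u) (wo_irr HJ) x y).
  - intros x _. reflexivity.
Qed.

Lemma bstart_le (j : J) (p : idx X) : inblock j p -> p = bstart j \/ ltw (bstart j) p.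
Proof.
  intros Hp. destruct (wo_total HX p (bstart j)) as [H|[H|H]]; auto.
  exfalso; exact (bstart_least Hp H).
Qed.

Lemma bstart_lt (j k : J) : ltw (bstart j) (bstart k) <-> olt j k.
Proof.
  destruct (classic (j = k)) as [E|E].
  - subst. split; intros H; exfalso; [exact (wo_irr HX H)| exact (wo_irr HJ H)].
  - apply wprod_lt_diff. simpl. auto.
Qed.

Lemma wprod_lt_not_olt (p q : idx X) : ltw p q -> ~ olt (projT1 q) (projT1 p).
Proof.
  intros H H'. apply wprod_lt_olt in H'. exact (wo_irr HX (wo_trans HX H H')).
Qed.

Lemma bstart_le_block (p : idx X) : ltw (bstart (projT1 p)) p \/ bstart (projT1 p) = p.
Proof.
  destruct (bstart_le (p := p) (j := projT1 p) (erefl _)); auto.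
Qed.

Definition is_bstart (p : idx X) : Prop := forall q : idx X, projT1 q = projT1 p -> ~ ltw q p.

Lemma is_bstart_bstart (j : J) : is_bstart (bstart j).
Proof. intros q E. apply bstart_least. exact E. Qed.

Lemma is_bstart_eq (p : idx X) : is_bstart p -> p = bstart (projT1 p).
Proof.
  intros H. destruct (bstart_le_block p) as [H'|H']; auto.
  exfalso. exact (H (bstart (projT1 p)) (erefl _) H').
Qed.

Lemma lt_bstart_olt (p : idx X) (j : J) : ltw p (bstart j) -> olt (projT1 p) j.
Proof.
  intros H. destruct (wprod_lt_block H) as [H'|H']; auto.
  exfalso. exact (bstart_least H' H).
Qed.

Lemma inblock_between (y q : idx X) (k : J) :
  ~ ltw y (bstart k) -> ltw y q -> projT1 q = k -> projT1 y = k.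
Proof.
  intros H1 H2 E. destruct (wo_total HJ (projT1 y) k) as [H|[H|H]]; auto.
  - exfalso. apply H1. apply wprod_lt_olt. exact H.
  - exfalso. apply (wprod_lt_not_olt H2). rewrite E. exact H.
Qed.

Lemma dense_nonincr_lt_lex (j1 j : J) : olt j1 j ->
  (forall b, ~ olt b j1 -> olt b j -> weq (u b) (u j1)) ->
  ~ weq (u j) (u j1) -> lt_lex (u j) (u j1).
Proof.
  intros Hj Hc Hn.
  destruct (ord_succ_bound j HJ) as [g' Hg'].
  have Hj1 : below g' j1. { apply Hg'. intros H. exact (wo_irr HJ (wo_trans HJ H Hj)). }
  destruct (Hd Hj1) as [H|[b [b' [Hb Hbb' Hb' Hlt]]]].
  - exfalso. apply Hn. apply H.
    + intros H'. exact (wo_irr HJ (wo_trans HJ H' Hj)).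
    + apply Hg'. apply (wo_irr HJ).
  - apply Hg' in Hb'.
    have Hbj : olt b j.
    { destruct (wo_total HJ b' j) as [H|[H|H]]; [exact (wo_trans HJ Hbb' H)| subst; auto | contradiction]. }
    have Eb := Hc b Hb Hbj.
    destruct (wo_total HJ b' j) as [H|[H|H]]; [| subst b'; eapply lt_lex_weq_r; eauto | contradiction].
    exfalso. destruct Hlt as [_ Hn'].
    have Eb' : weq (u b') (u j1).
    { apply Hc; auto. intros H1. exact (Hb (wo_trans HJ Hbb' H1)). }
    apply Hn'. eapply weq_trans; [exact Eb'|apply weq_sym; exact Eb].
Qed.

Section BlockPower.
Variables (G : J -> Prop) (c : word).
Hypothesis Hc : is_word c.
Variable hh : forall k : subord G, idx (u (proj1_sig k)) -> idx c.
Arguments hh : clear implicits.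
Hypothesis Hhh : forall k : subord G, iso_on (a:=u (proj1_sig k)) (b:=c) full full (hh k).

Definition to_power (r : idx X) (P : G (projT1 r)) : idx (wpow c (subord G)) :=
  existT (fun _ => idx c) (exist G (projT1 r) P) (hh (exist G (projT1 r) P) (projT2 r)).

Lemma to_power_congr (r s : idx X) (P : G (projT1 r)) (Q : G (projT1 s)) :
  r = s -> to_power P = to_power Q.
Proof. intros <-. by rewrite (proof_irrelevance _ P Q). Qed.

Lemma to_power_lab (r : idx X) (P : G (projT1 r)) : lab (to_power P) = lab r.
Proof. exact (iso_on_lab (Hhh (exist G (projT1 r) P)) (projT2 r) I). Qed.

Lemma to_power_lt (r s : idx X) (P : G (projT1 r)) (Q : G (projT1 s)) :
  ltw (to_power P) (to_power Q) <-> ltw r s.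
Proof.
  case: r P => j a P; case: s Q => k b Q.
  destruct (classic (j = k)) as [<-|Ejk].
  - rewrite (proof_irrelevance _ P Q) /to_power.
    rewrite (wprod_lt_same (u := fun _ => c) (wo_irr (is_ordinal_subord G HJ))).
    rewrite (wprod_lt_same (u:=u) (wo_irr HJ)).
    symmetry. exact (iso_on_lt (Hhh (exist G j Q)) a b I I).
  - rewrite (wprod_lt_diff (u:=u)) // wprod_lt_diff //.
    intros E. apply Ejk. exact (f_equal (@proj1_sig _ _) E).
Qed.

Lemma to_power_inj (r s : idx X) (P : G (projT1 r)) (Q : G (projT1 s)) :
  to_power P = to_power Q -> r = s.
Proof.
  case: r P => j a P; case: s Q => k b Q E.
  have Ejk : j = k := f_equal (fun y => proj1_sig (projT1 y)) E.
  subst k. rewrite (proof_irrelevance _ P Q) in E.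
  apply Eqdep.EqdepTheory.inj_pair2 in E. f_equal.
  exact (iso_on_inj (Hu j) Hc (Hhh (exist G j Q)) I I E).
Qed.

Lemma to_power_onto (y : idx (wpow c (subord G))) : exists r (P : G (projT1 r)), to_power P = y.
Proof.
  case: y => [[j P] b]. destruct (iso_on_onto (Hhh (exist G j P)) b I) as [a [_ Ea]].
  exists (existT _ j a), P. by rewrite /to_power Ea.
Qed.

End BlockPower.

Lemma weq_wpow_blocks (G : J -> Prop) (c w : word) (psi : idx w -> idx X) :
  is_word c -> is_word w -> (forall j, G j -> weq (u j) c) ->
  iso_on (a:=w) (b:=X) full (fun r => G (projT1 r)) psi -> weq w (wpow c (subord G)).
Proof.
  intros Hc Hw Hwq Hpsi.
  have HH : forall k : subord G, {h | iso_on (a:=u (proj1_sig k)) (b:=c) full full h}.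
  { intros k. apply constructive_indefinite_description, weq_iso_on, Hwq, (proj2_sig k). }
  set hh := fun k => proj1_sig (HH k).
  have Hhh : forall k, iso_on full full (hh k) := fun k => proj2_sig (HH k).
  have pf : forall x, G (projT1 (psi x)) := fun x => iso_on_into Hpsi x I.
  apply iso_on_inj_weq with (f := fun x => to_power hh (pf x)).
  - split; [|split; [|split]].
    + done.
    + intros y _. destruct (to_power_onto Hhh y) as [r [P <-]].
      destruct (iso_on_onto Hpsi r P) as [x [_ Ex]].
      exists x. split; [done|exact (to_power_congr hh _ _ Ex)].
    + intros x y _ _. rewrite (to_power_lt Hhh). exact (iso_on_lt Hpsi x y I I).
    + intros x _. rewrite (to_power_lab Hhh). exact (iso_on_lab Hpsi x I).
  - intros x y E. exact (iso_on_inj Hw HX Hpsi I I (to_power_inj Hc Hhh E)).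
Qed.

Lemma primitive_blocks_single (G : J -> Prop) (c w : word) (psi : idx w -> idx X) :
  is_word c -> is_word w -> primitive w -> (forall j, G j -> weq (u j) c) ->
  iso_on (a:=w) (b:=X) full (fun r => G (projT1 r)) psi ->
  forall j j', G j -> G j' -> j = j'.
Proof.
  intros Hc Hw Hpr Hwq Hpsi j j' Gj Gj'.
  have HOG := is_ordinal_subord G HJ.
  destruct (Hpr c (subord G) Hc HOG (weq_wpow_blocks Hc Hw Hwq Hpsi)) as [[t Ht] _].
  have E : exist G j Gj = exist G j' Gj' by rewrite (Ht (exist G j Gj)) (Ht (exist G j' Gj')).
  exact (f_equal (@proj1_sig _ _) E).
Qed.

(* A prime word [w] occupying the factor of [wprod u] that starts with block [i],
   ends with the downward closed set [Wt], and reaches beyond block [i]: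
   we derive a contradiction. *)
Section PrimeSpan.
Variable i : J.
Variable Wt : idx X -> Prop.
Hypothesis HWt : forall r r', Wt r -> ltw r' r -> Wt r'.
Variable w : word.
Hypothesis Hw : is_word w.
Hypothesis Hpw : prime_word w.
Variable psi : idx w -> idx X.
Definition span (r : idx X) : Prop := ~ ltw r (bstart i) /\ Wt r.
Hypothesis Hpsi : iso_on (a:=w) (b:=X) full span psi.
Hypothesis Hpast : exists r, span r /\ olt i (projT1 r).
Definition span_from (q r : idx X) : Prop := span r /\ ~ ltw r q.
Definition later_block (j : J) : Prop := olt i j /\ Wt (bstart j).

Lemma span_bstart : span (bstart i).
Proof.
  destruct Hpast as [r [[_ Wr] Hr]]. split; [apply (wo_irr HX)|].
  apply (HWt Wr). apply wprod_lt_olt. exact Hr.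
Qed.

Lemma inblock_span y : inblock i y -> span y.
Proof.
  intros Hy. destruct Hpast as [r [[_ Wr] Hr]]. split.
  - apply bstart_least; auto.
  - apply (HWt Wr). apply wprod_lt_olt. unfold inblock in Hy. rewrite Hy. exact Hr.
Qed.

Lemma initial_in_block_span : initial_in (inblock i) span.
Proof.
  intros y y' Hy [Hy' _] Hl. destruct (wprod_lt_block Hl) as [H|H].
  - exfalso. apply Hy'. apply wprod_lt_olt. unfold inblock in Hy. rewrite Hy in H. exact H.
  - unfold inblock in *. rewrite H; auto.
Qed.

Lemma span_exceeds_block : exists r, span r /\ ~ inblock i r.
Proof.
  destruct Hpast as [r [Wr Hr]]. exists r. split; auto.
  unfold inblock. intros E. rewrite E in Hr. exact (wo_irr HJ Hr).
Qed.

(* The suffix condition of primality: [w] is lexicographically below its proper suffixes. *)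
Lemma span_lelex_tail q : span q -> lelex_in (a:=X) (b:=X) span (span_from q).
Proof.
  intros Wq. destruct (wo_total HX q (bstart i)) as [H|[->|H]].
  - exfalso; exact (proj1 Wq H).
  - left. apply prefix_in_initial.
    + intros y Wy. split; [exact Wy|exact (proj1 Wy)].
    + intros y y' _ [Wy' _] _. exact Wy'.
  - destruct (iso_on_onto Hpsi q Wq) as [gq [_ <-]].
    destruct (iso_on_onto Hpsi (bstart i) span_bstart) as [gs [_ Egs]].
    have Hpp : proper_pos gq.
    { exists gs. apply (iso_on_lt Hpsi gs gq I I). by rewrite Egs. }
    have Hsf : iso_on (a:=wsuffix gq) full (span_from (psi gq)) (fun x => psi (proj1_sig x)).
    { exact (iso_on_comp (iso_on_wsuffix gq) (iso_on_above Hw Hpsi I)). }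
    destruct (lelex_in_le_lex (proj2 Hpw gq Hpp)) as [HL|HL]; [left|right].
    + exact (prefix_in_transport HX Hw HL Hpsi Hsf).
    + exact (strlt_in_transport HX Hw HL Hpsi Hsf).
Qed.

Lemma span_blocks r : span r -> projT1 r = i \/ later_block (projT1 r).
Proof.
  intros [Hr Wr]. destruct (wo_total HJ (projT1 r) i) as [H|[H|H]]; auto.
  - exfalso. apply Hr. apply wprod_lt_olt. exact H.
  - right. split; auto. destruct (bstart_le_block r) as [H'|H'].
    + exact (HWt Wr H').
    + rewrite H'. exact Wr.
Qed.

Lemma later_block_bstart j : later_block j -> span (bstart j) /\ ltw (bstart i) (bstart j).
Proof.
  intros [Hij Wj]. have H : ltw (bstart i) (bstart j) by apply bstart_lt; auto.
  split; auto. split; auto. apply (wo_asym HX H).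
Qed.

Lemma later_block_in_tail j : later_block j -> (exists r, span r /\ olt j (projT1 r)) ->
  (forall y, inblock j y -> span_from (bstart j) y) /\ initial_in (inblock j) (span_from (bstart j)).
Proof.
  intros [Hij Wj] [r [[_ Wr] Hr]]. split.
  - intros y Hy. split; [split|].
    + apply (wo_asym HX). apply wprod_lt_olt. unfold inblock in Hy. simpl. rewrite Hy. exact Hij.
    + apply (HWt Wr). apply wprod_lt_olt. unfold inblock in Hy. rewrite Hy. exact Hr.
    + apply bstart_least; auto.
  - intros y y' Hy [_ Hy'] Hl. destruct (wprod_lt_block Hl) as [H|H].
    + exfalso. apply Hy'. apply wprod_lt_olt. unfold inblock in Hy. rewrite Hy in H. exact H.
    + unfold inblock in *. rewrite H; auto.
Qed.

Lemma tail_prefix_last_block j : later_block j -> ~ (exists r, span r /\ olt j (projT1 r)) ->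
  prefix_in (a:=X) (b:=X) (span_from (bstart j)) (inblock j).
Proof.
  intros [Hij Wj] Hn. apply prefix_in_initial.
  - intros y [Wy Hy]. unfold inblock. destruct (wo_total HJ (projT1 y) j) as [H|[H|H]]; auto.
    + exfalso. apply Hy. apply wprod_lt_olt. exact H.
    + exfalso. apply Hn. exists y; auto.
  - intros y y' [[_ Wy] _] Hy' Hl. split; [split|].
    + apply (wo_asym HX). apply wprod_lt_olt. unfold inblock in Hy'. simpl. rewrite Hy'. exact Hij.
    + exact (HWt Wy Hl).
    + apply bstart_least; auto.
Qed.

Lemma span_not_prefix_block : prefix_in (a:=X) (b:=X) span (inblock i) -> False.
Proof.
  intros HP.
  exact (prefix_in_proper_contra HX HP inblock_span initial_in_block_span span_exceeds_block).
Qed.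

Definition cut_in_block (o : option (idx X)) : Prop :=
  match o with Some q => inblock i q | None => True end.
Definition block_prefix_at (j : J) (o : option (idx X)) : Prop :=
  cut_in_block o /\
  exists e, iso_on (a:=X) (b:=X) (inblock j) (fun p => inblock i p /\ below_cut o p) e.
Definition cut_candidate (o : option (idx X)) : Prop :=
  exists j, (j = i \/ later_block j) /\ block_prefix_at j o.

Lemma minimal_cut_candidate :
  exists o1, cut_candidate o1 /\ forall o, cut_lt o o1 -> ~ cut_candidate o.
Proof.
  apply (wf_minimal (cut_lt_wf HX)). exists None, i. split; auto. split; [exact I|].
  exists (fun x => x). apply (iso_on_ext (iso_on_id (inblock i))); intros; simpl; tauto.
Qed.

(* [j1] is a block among [i] and the later blocks, isomorphic to the shortest possible
   prefix [o1] of block [i]. *)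
Section ShortestBlock.
Variable j1 : J.
Variable o1 : option (idx X).
Variable e : idx X -> idx X.
Hypothesis Hj1 : j1 = i \/ later_block j1.
Hypothesis He : iso_on (a:=X) (b:=X) (inblock j1) (fun p => inblock i p /\ below_cut o1 p) e.
Hypothesis Hmin : forall o, cut_lt o o1 -> ~ cut_candidate o.

Lemma block_j1_prefix : prefix_in (a:=X) (b:=X) (inblock j1) (inblock i).
Proof.
  exists e, (fun p => inblock i p /\ below_cut o1 p). split; [exact He|split].
  - intros y [H _]; exact H.
  - intros y y' [Hy Hb] Hy' Hl. split; auto. destruct o1 as [b|]; simpl in *; auto.
    exact (wo_trans HX Hl Hb).
Qed.

Lemma olt_i_of_j1 j : olt j1 j -> olt i j.
Proof. intros H. destruct Hj1 as [E|[H' _]]; [subst; auto | exact (wo_trans HJ H' H)]. Qed.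

Lemma later_block_not_pprefix j : later_block j -> ~ pprefix_in (a:=u j) (b:=u j1) full full.
Proof.
  intros HMj HP.
  destruct (pprefix_in_transport HX (Hu j) HP (iso_on_block j) (iso_on_block j1)) as [q [f [Bq Hf]]].
  destruct (iso_on_into He q Bq) as [Beq Heq].
  apply (Hmin (o := Some (e q))); [by apply cut_lt_Some|].
  exists j. split; [by right|]. split; [exact Beq|].
  exists (fun x => e (f x)).
  eapply iso_on_ext; [exact (iso_on_comp Hf (iso_on_below He Bq)) | tauto |].
  intros y; simpl. split.
  - intros [H1 H2]. split; [split; [exact H1|]|exact H2].
    destruct o1 as [b|]; simpl in *; auto. exact (wo_trans HX H2 Heq).
  - intros [[H1 _] H2]. auto.
Qed.

Lemma later_block_not_strlt j : later_block j -> ~ strlt_in (a:=u j) (b:=u j1) full full.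
Proof.
  intros HMj HS.
  have HS' := strlt_in_transport HX (Hu j) HS (iso_on_block j) (iso_on_block j1).
  have HS2 := strlt_prefix_in_trans HS' block_j1_prefix.
  destruct (later_block_bstart HMj) as [Wsj _].
  have HL := span_lelex_tail Wsj.
  destruct (classic (exists r, span r /\ olt j (projT1 r))) as [Hy|Hy].
  - destruct (later_block_in_tail HMj Hy) as [S D].
    exact (lelex_strlt_prefix_contra HX HL (strlt_in_initial_l HS2 S D)
      inblock_span initial_in_block_span).
  - destruct (prefix_strlt_in HX (tail_prefix_last_block HMj Hy) HS2) as [HP|[q [Wq HP]]].
    + exact (lelex_strlt_prefix_contra HX HL HP inblock_span initial_in_block_span).
    + have HP' := prefix_in_initial_r HP (fun y H => proj1 H) (initial_in_below HX).
      exact (lelex_prefix_proper_contra HX HL HP' inblock_span initial_in_block_span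
        span_exceeds_block).
Qed.

(* Minimal counterexample: the blocks strictly between [j1] and it all equal [u j1],
   so density forces it below [u j1]. *)
Lemma blocks_after_j1_weq j0 : later_block j0 -> olt j1 j0 -> weq (u j0) (u j1).
Proof.
  intros HMj0 Hj0. apply NNPP. intros Hnw0.
  destruct (@wf_minimal _ _ (wo_wf HJ) (fun j => later_block j /\ olt j1 j /\ ~ weq (u j) (u j1)))
    as [j [[HMj [Hj Hnw]] Hm]]; [by exists j0|].
  have HD : lt_lex (u j) (u j1).
  { apply dense_nonincr_lt_lex; auto. intros b Hb Hbj. destruct (wo_total HJ b j1) as [H|[<-|H]].
    - contradiction.
    - apply weq_refl.
    - apply NNPP. intros Hnb. apply (Hm b Hbj). split; [|split; auto].
      split; [exact (olt_i_of_j1 H)|]. destruct HMj as [_ Wj]. apply (HWt Wj). by apply bstart_lt. }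
  destruct (lt_lex_in_cases (Hu j) (Hu j1) HD) as [HP|HS].
  - exact (later_block_not_pprefix HMj HP).
  - exact (later_block_not_strlt HMj HS).
Qed.

Definition after_j1 (l : J) : Prop := l = j1 \/ (later_block l /\ olt j1 l).

Lemma after_j1_prefix l : after_j1 l -> prefix_in (a:=X) (b:=X) (inblock l) (inblock i).
Proof.
  intros [->|[HM Hl]]; [exact block_j1_prefix|].
  destruct (weq_iso_on (blocks_after_j1_weq HM Hl)) as [h0 Hh0].
  destruct (iso_on_conj HX (Hu l) (iso_on_block l) Hh0 (iso_on_block j1)) as [h [Hh _]].
  exact (prefix_in_trans (prefix_in_iso Hh) block_j1_prefix).
Qed.

Lemma span_from_prefix_after_j1_contra x l : span x -> after_j1 l ->
  prefix_in (a:=X) (b:=X) (span_from x) (inblock l) -> False.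
Proof.
  intros Wx Hl HP.
  exact (lelex_prefix_proper_contra HX (span_lelex_tail Wx) (prefix_in_trans HP (after_j1_prefix Hl))
    inblock_span initial_in_block_span span_exceeds_block).
Qed.

Lemma later_block_succ l : later_block l -> exists l', later_block l' /\ olt l l'.
Proof.
  intros HMl. apply NNPP. intros Hmax.
  have Hl : after_j1 l.
  { destruct Hj1 as [E|HM1]; [right; split; [done|rewrite E; exact (proj1 HMl)]|].
    destruct (wo_total HJ l j1) as [H|[H|H]]; [|by left|by right].
    case: Hmax. by exists j1. }
  have Hn : ~ (exists r, span r /\ olt l (projT1 r)).
  { intros [r [Wr Hr]]. destruct (span_blocks Wr) as [E|HM].
    - rewrite E in Hr. exact (wo_asym HJ (proj1 HMl) Hr).
    - apply Hmax. by exists (projT1 r). }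
  exact (span_from_prefix_after_j1_contra (proj1 (later_block_bstart HMl)) Hl
    (tail_prefix_last_block HMl Hn)).
Qed.

Lemma span_iff r : span r <-> (projT1 r = i \/ later_block (projT1 r)).
Proof.
  split; [apply span_blocks|]. intros [E|HM].
  - apply inblock_span. exact E.
  - destruct (later_block_succ HM) as [l' [[_ Wl'] Hl']]. split.
    + apply (wo_asym HX). apply wprod_lt_olt. exact (proj1 HM).
    + apply (HWt Wl'). apply wprod_lt_olt. exact Hl'.
Qed.

(* If block [i] itself is the shortest, all blocks of [w] equal [u i]: [w] is a proper power. *)
Lemma shortest_block_i_contra : j1 = i -> False.
Proof.
  intros E.
  have HG : forall j, (j = i \/ later_block j) -> weq (u j) (u i).
  { intros j [->|HM]; [apply weq_refl|].
    rewrite -E. apply blocks_after_j1_weq; auto. rewrite E. exact (proj1 HM). }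
  have Hs : iso_on (a:=w) (b:=X) full (fun r => projT1 r = i \/ later_block (projT1 r)) psi.
  { eapply iso_on_ext; [exact Hpsi | tauto |]. intros y. symmetry. apply span_iff. }
  destruct Hpast as [r [Wr Hr]].
  have Eq := primitive_blocks_single (Hu i) Hw (proj1 Hpw) HG Hs (or_introl (erefl i))
    (proj1 (span_iff r) Wr).
  rewrite -Eq in Hr. exact (wo_irr HJ Hr).
Qed.

Section LaterShortest.
Hypothesis HM1 : later_block j1.
Definition tail_block (j : J) : Prop := later_block j /\ ~ olt j j1.
Local Notation tail := (span_from (bstart j1)).

Lemma tail_iff r : tail r <-> tail_block (projT1 r).
Proof.
  split.
  - intros [Wr Hr]. destruct (span_blocks Wr) as [E|HM].
    + exfalso. apply Hr. apply wprod_lt_olt. rewrite E. exact (proj1 HM1).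
    + split; auto. intros Hl. apply Hr. apply wprod_lt_olt. exact Hl.
  - intros [HM Hn]. split.
    + apply span_iff. auto.
    + intros Hl. apply Hn. exact (lt_bstart_olt Hl).
Qed.

Lemma tail_block_j1 : tail_block j1.
Proof. split; [exact HM1|exact (wo_irr HJ (a:=j1))]. Qed.

Lemma tail_block_after_j1 k : tail_block k -> after_j1 k.
Proof. intros [HM Hn]. destruct (wo_total HJ k j1) as [H|[H|H]]; [contradiction|by left|by right]. Qed.

Lemma tail_block_weq k : tail_block k -> weq (u k) (u j1).
Proof.
  intros Hk. destruct (tail_block_after_j1 Hk) as [->|[HM Hl]]; [apply weq_refl|].
  exact (blocks_after_j1_weq HM Hl).
Qed.

Lemma tail_below_block_iff (p' y : idx X) : tail_block (projT1 p') ->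
  ((tail y /\ ltw y p') /\ ~ ltw y (bstart (projT1 p'))) <-> (inblock (projT1 p') y /\ ltw y p').
Proof.
  intros Gk. split.
  - intros [[_ Hy] Hs]. split; [exact (inblock_between Hs Hy (erefl _))|exact Hy].
  - intros [By Hy]. split; [split; [apply tail_iff; by rewrite By|exact Hy]|].
    exact (bstart_least By).
Qed.

Lemma tail_prefix_all_contra f : iso_on (a:=X) (b:=X) span tail f -> False.
Proof.
  intros Hf. destruct (later_block_succ HM1) as [l' [HMl' Hl']].
  have Hs : iso_on (a:=w) (b:=X) full (fun r => tail_block (projT1 r)) (fun x => f (psi x)).
  { eapply iso_on_ext; [exact (iso_on_comp Hpsi Hf) | tauto |]. intros y. by rewrite tail_iff. }
  have Gl' : tail_block l' by split; [|exact (wo_asym HJ Hl')].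
  have E := primitive_blocks_single (Hu j1) Hw (proj1 Hpw) tail_block_weq Hs tail_block_j1 Gl'.
  rewrite -E in Hl'. exact (wo_irr HJ Hl').
Qed.

Lemma tail_prefix_cut_inside_contra f p : tail p -> ltw (bstart (projT1 p)) p ->
  iso_on (a:=X) (b:=X) span (fun y => tail y /\ ltw y p) f -> False.
Proof.
  intros Tp Hsp Hf. have Gk : tail_block (projT1 p) := proj1 (tail_iff p) Tp.
  have Fk : tail (bstart (projT1 p)) /\ ltw (bstart (projT1 p)) p.
  { split; [by apply tail_iff|exact Hsp]. }
  destruct (iso_on_onto Hf _ Fk) as [x [Wx Ex]].
  have Hseg := iso_on_above HX Hf Wx. rewrite Ex in Hseg.
  apply (span_from_prefix_after_j1_contra Wx (tail_block_after_j1 Gk)).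
  apply (prefix_in_initial_r (B1 := fun y => inblock (projT1 p) y /\ ltw y p));
    [|by move=> y [] | exact (initial_in_below HX)].
  apply (prefix_in_iso (f := f)). eapply iso_on_ext; [exact Hseg | done |].
  intros y. symmetry. exact (tail_below_block_iff y Gk).
Qed.

(* Cutting [tail] at a block start leaves whole blocks, all equal to [u j1];
   primitivity of [w] then confines its image to block [j1]. *)
Lemma tail_prefix_cut_start_contra f p : tail p -> bstart (projT1 p) = p ->
  iso_on (a:=X) (b:=X) span (fun y => tail y /\ ltw y p) f -> False.
Proof.
  intros Tp Hsp Hf. set k := projT1 p. have Gk : tail_block k := proj1 (tail_iff p) Tp.
  have Hjk : olt j1 k.
  { destruct (tail_block_after_j1 Gk) as [E|[_ H]]; [exfalso|exact H].
    destruct (iso_on_into Hf (bstart i) span_bstart) as [[_ H1] H2].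
    apply H1. by rewrite -E Hsp. }
  set G2 := fun j => tail_block j /\ olt j k.
  have F2 : forall y, (tail y /\ ltw y p) <-> G2 (projT1 y).
  { intros y. rewrite tail_iff /G2 -Hsp. split; intros [H1 H2]; split; auto.
    - exact (lt_bstart_olt H2).
    - by apply wprod_lt_olt. }
  have Hs : iso_on (a:=w) (b:=X) full (fun r => G2 (projT1 r)) (fun x => f (psi x)).
  { eapply iso_on_ext; [exact (iso_on_comp Hpsi Hf) | tauto |]. intros y. symmetry. apply F2. }
  have G2j1 : G2 j1 by split; [exact tail_block_j1|exact Hjk].
  have HG2 : forall j, G2 j -> weq (u j) (u j1) by move=> j [Gj _]; exact: tail_block_weq.
  apply span_not_prefix_block. apply (prefix_in_trans (B := inblock j1)); [|exact block_j1_prefix].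
  exists f, (fun y => tail y /\ ltw y p). split; [exact Hf|split].
  - intros y Fy. apply F2 in Fy. exact (primitive_blocks_single (Hu j1) Hw (proj1 Hpw) HG2 Hs Fy G2j1).
  - intros y y' _ By' _. apply F2. unfold inblock in By'. by rewrite By'.
Qed.

Lemma tail_prefix_contra : prefix_in (a:=X) (b:=X) span tail -> False.
Proof.
  intros [f [F' [Hf [SF DF]]]].
  destruct (initial_in_cases HX SF DF) as [Hall|[p [Tp Hp]]].
  - apply (tail_prefix_all_contra (f := f)).
    eapply iso_on_ext; [exact Hf|done|]. intros y. symmetry. exact (Hall y).
  - have Hf' : iso_on span (fun y => tail y /\ ltw y p) f.
    { eapply iso_on_ext; [exact Hf|done|]. intros y. symmetry. exact (Hp y). }
    destruct (bstart_le_block p) as [Hsp|Hsp].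
    + exact (tail_prefix_cut_inside_contra Tp Hsp Hf').
    + exact (tail_prefix_cut_start_contra Tp Hsp Hf').
Qed.

Lemma span_from_strlt_block_contra (x p p' : idx X) m : span x -> span p -> ~ ltw p x ->
  tail_block (projT1 p') ->
  iso_on (a:=X) (b:=X) (fun y => (span y /\ ltw y p) /\ ~ ltw y x)
    (fun y => (tail y /\ ltw y p') /\ ~ ltw y (bstart (projT1 p'))) m ->
  (lab p < lab p')%O -> False.
Proof.
  intros Wx Wp Hpx Gk Hm Hlab.
  have Hm' : iso_on (fun y => span_from x y /\ ltw y p)
    (fun y => inblock (projT1 p') y /\ ltw y p') m.
  { eapply iso_on_ext; [exact Hm | rewrite /span_from; tauto |].
    intros y. symmetry. exact (tail_below_block_iff y Gk). }
  destruct (after_j1_prefix (tail_block_after_j1 Gk)) as [h [B' [Hh [SB' DB']]]].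
  have Bp' : inblock (projT1 p') p' by [].
  have Hc := iso_on_comp Hm' (iso_on_below Hh Bp').
  have HS : strlt_in (a:=X) (b:=X) (span_from x) B'.
  { exists p, (h p'), (fun y => h (m y)). split; [by split|split; [exact (iso_on_into Hh p' Bp')|]].
    split; [exact Hc|by rewrite (iso_on_lab Hh p' Bp')]. }
  have SB y : B' y -> span y := fun H => inblock_span (SB' y H).
  have DB : initial_in B' span := initial_in_trans DB' initial_in_block_span SB'.
  exact (lelex_strlt_prefix_contra HX (span_lelex_tail Wx) HS SB DB).
Qed.

Lemma tail_strlt_contra p p' g : span p -> tail p' ->
  iso_on (a:=X) (b:=X) (fun y => span y /\ ltw y p) (fun y => tail y /\ ltw y p') g ->
  (lab p < lab p')%O -> False.
Proof.
  intros Wp Tp' Hg Hlab. have Gk : tail_block (projT1 p') := proj1 (tail_iff p') Tp'.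
  destruct (bstart_le_block p') as [Hsp|Hsp].
  - have Fk : tail (bstart (projT1 p')) /\ ltw (bstart (projT1 p')) p'.
    { split; [by apply tail_iff|exact Hsp]. }
    destruct (iso_on_onto Hg _ Fk) as [x [[Wx Hxp] Ex]].
    have Hm := iso_on_above HX Hg (conj Wx Hxp). rewrite Ex in Hm.
    exact (span_from_strlt_block_contra Wx Wp (wo_asym HX Hxp) Gk Hm Hlab).
  - apply (span_from_strlt_block_contra (x := p) (m := fun y => y) Wp Wp (wo_irr HX (a:=p)) Gk);
      [|exact Hlab].
    apply iso_on_empty.
    + intros y [[_ H1] H2]. contradiction.
    + intros y [[_ H1] H2]. rewrite Hsp in H2. contradiction.
Qed.

Lemma later_shortest_contra : False.
Proof.
  destruct (later_block_bstart HM1) as [Ws1 _].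
  destruct (span_lelex_tail Ws1) as [HP | [p [p' [g [Wp [Tp' [Hg Hlab]]]]]]].
  - exact (tail_prefix_contra HP).
  - exact (tail_strlt_contra Wp Tp' Hg Hlab).
Qed.

End LaterShortest.
End ShortestBlock.

Lemma prime_span_contra : False.
Proof.
  destruct minimal_cut_candidate as [o1 [[j1 [Hj1 [_ [e He]]]] Hmin]].
  destruct (classic (j1 = i)) as [E|NE].
  - exact (shortest_block_i_contra Hj1 He Hmin E).
  - have HM1 : later_block j1 by destruct Hj1.
    exact (later_shortest_contra Hj1 He Hmin HM1).
Qed.

End PrimeSpan.
End Blocks.

Section BlockStartStep.
Context {disp : Order.disp_t} {A : finOrderType disp}.
Local Notation word := (@word disp A).
Variables (J K : ord) (u : J -> word) (v : K -> word).
Hypotheses (HJ : is_ordinal J) (HK : is_ordinal K).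
Hypotheses (Hu : forall j, is_word (u j)) (Hv : forall k, is_word (v k)).
Hypotheses (Hneu : forall j, inhabited (idx (u j))) (Hnev : forall k, inhabited (idx (v k))).
Hypotheses (HXu : is_word (wprod u)) (HXv : is_word (wprod v)).
Hypothesis Hdu : dense_nonincr u.
Hypothesis Hpv : forall k, prime_word (v k).
Local Notation X := (wprod u).
Local Notation Y := (wprod v).
Variables (phi : idx X -> idx Y) (phi' : idx Y -> idx X).
Hypothesis Hphi' : iso_on (a:=Y) (b:=X) full full phi'.
Hypothesis Hinv1 : forall x, phi' (phi x) = x.
Hypothesis Hinv2 : forall y, phi (phi' y) = y.
Local Notation stU := (bstart Hu Hneu).
Local Notation stV := (bstart Hv Hnev).

Lemma phi'_lt (x y : idx Y) : ltw x y <-> ltw (phi' x) (phi' y).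
Proof. exact (iso_on_lt Hphi' x y I I). Qed.

Lemma phi_lt (x y : idx X) : ltw x y <-> ltw (phi x) (phi y).
Proof. by rewrite phi'_lt !Hinv1. Qed.

Definition below_image (k : K) (r : idx X) : Prop := exists r', projT1 (phi r') = k /\ ~ ltw r' r.

Lemma below_image_closed (k : K) r r' : below_image k r -> ltw r' r -> below_image k r'.
Proof.
  intros [r0 [E H]] Hl. exists r0. split; [exact E|]. intros Hl'. exact (H (wo_trans HXu Hl' Hl)).
Qed.

Lemma span_below_image_iff (k : K) (i : J) : phi' (stV k) = stU i ->
  forall r, span Hu Hneu i (below_image k) r <-> exists y, projT1 y = k /\ phi' y = r.
Proof.
  intros Es r. rewrite /span -Es. split.
  - intros [Hr [r' [E Hr']]]. exists (phi r). split; [|apply Hinv1].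
    have H1 : ~ ltw (phi r) (stV k).
    { intros Hl. apply Hr. rewrite -(Hinv1 r). by apply phi'_lt. }
    destruct (wo_total HXu r r') as [H|[<-|H]]; [|exact E|contradiction].
    apply phi_lt in H. exact (inblock_between HK HXv H1 H E).
  - intros [y [E <-]]. split.
    + intros Hl. apply phi'_lt in Hl. exact (bstart_least HK E Hl).
    + exists (phi' y). rewrite Hinv2. split; [exact E|apply (wo_irr HXu)].
Qed.

Lemma iso_on_block_image (k : K) (i : J) : phi' (stV k) = stU i ->
  iso_on (a:=v k) (b:=X) full (span Hu Hneu i (below_image k)) (fun b => phi' (existT _ k b)).
Proof.
  intros Es.
  have Hc := iso_on_comp (iso_on_block v HK k) (iso_on_restr Hphi' (SA' := inblock k) (fun _ _ => I)).
  eapply iso_on_ext; [exact Hc | tauto |].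
  intros y. rewrite (span_below_image_iff Es). unfold inblock. tauto.
Qed.

(* At the first block start [p] of [X] not sent to a block start of [Y], the block
   of [Y] containing [phi p] is a prime word spanning a factor of [X] that begins
   at a block start and reaches beyond that block. *)
Lemma bstart_reflect_step (p : idx X) : is_bstart p -> ~ is_bstart (phi p) ->
  (forall p', ltw p' p -> (is_bstart p' <-> is_bstart (phi p'))) -> False.
Proof.
  intros Sp Snp Hmin. set k := projT1 (phi p).
  have Hsk : ltw (stV k) (phi p).
  { destruct (bstart_le_block HK Hv Hnev HXv (phi p)) as [H|H]; [exact H|].
    case: Snp. rewrite -H. apply (is_bstart_bstart HK). }
  set s := phi' (stV k).
  have Hsp : ltw s p by rewrite -(Hinv1 p); apply phi'_lt.
  have Es : s = stU (projT1 s).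
  { apply (is_bstart_eq HJ Hu Hneu HXu), (Hmin s Hsp). rewrite /s Hinv2. apply (is_bstart_bstart HK). }
  apply (prime_span_contra HJ HXu Hdu (below_image_closed (k:=k)) (Hv k) (Hpv k) (iso_on_block_image Es)).
  exists p. split.
  - apply (span_below_image_iff Es). exists (phi p). split; [done|apply Hinv1].
  - destruct (wprod_lt_block Hsp) as [H|H]; [exact H|].
    exfalso. exact (Sp s H Hsp).
Qed.

Lemma block_map_const (Hc : forall p, is_bstart p <-> is_bstart (phi p)) (j : J) (a : idx (u j)) :
  projT1 (phi (existT _ j a)) = projT1 (phi (stU j)).
Proof.
  set q := existT (fun j => idx (u j)) j a.
  have Es : phi (stU j) = stV (projT1 (phi (stU j))).
  { apply (is_bstart_eq HK Hv Hnev HXv), Hc, (is_bstart_bstart HJ). }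
  set k := projT1 (phi (stU j)). fold k in Es.
  destruct (classic (projT1 (phi q) = k)) as [E|NE]; [exact E|exfalso].
  have Hlt : ltw (stV k) (phi q).
  { destruct (bstart_le_block HJ Hu Hneu HXu q) as [H|H]; [|rewrite -H in NE; contradiction].
    apply phi_lt in H. by rewrite -Es. }
  set k' := projT1 (phi q).
  have Hkk : olt k k'.
  { destruct (wprod_lt_block Hlt) as [H|H]; [exact H|]. case: NE. exact (esym H). }
  set r := phi' (stV k').
  have Er : r = stU (projT1 r).
  { apply (is_bstart_eq HJ Hu Hneu HXu), Hc. rewrite /r Hinv2. apply (is_bstart_bstart HK). }
  have H1 : olt j (projT1 r).
  { apply (bstart_lt HJ Hu Hneu HXu). rewrite -Er -(Hinv1 (stU j)) /r -phi'_lt Es.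
    by apply (bstart_lt HK Hv Hnev HXv). }
  destruct (bstart_le_block HK Hv Hnev HXv (phi q)) as [H|H].
  - have H2 : ltw r q by rewrite -(Hinv1 q) /r -phi'_lt.
    exact (wprod_lt_not_olt HXu H2 H1).
  - have H2 : r = q by rewrite /r H Hinv1.
    rewrite H2 in H1. exact (wo_irr HJ H1).
Qed.

End BlockStartStep.

Lemma existT_eq_rect (T : Type) (P : T -> Type) (p : sigT P) (k : T) (H : projT1 p = k) :
  existT P k (eq_rect (projT1 p) P (projT2 p) k H) = p.
Proof. destruct p as [x y]; simpl in *; subst; reflexivity. Qed.

Section Uniqueness.
Context {disp : Order.disp_t} {A : finOrderType disp}.
Local Notation word := (@word disp A).
Variables (J K : ord) (u : J -> word) (v : K -> word).
Hypotheses (HJ : is_ordinal J) (HK : is_ordinal K).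
Hypotheses (Hu : forall j, is_word (u j)) (Hv : forall k, is_word (v k)).
Hypotheses (Hneu : forall j, inhabited (idx (u j))) (Hnev : forall k, inhabited (idx (v k))).
Hypotheses (HXu : is_word (wprod u)) (HXv : is_word (wprod v)).
Hypotheses (Hdu : dense_nonincr u) (Hdv : dense_nonincr v).
Hypotheses (Hpu : forall j, prime_word (u j)) (Hpv : forall k, prime_word (v k)).
Local Notation X := (wprod u).
Local Notation Y := (wprod v).
Variables (phi : idx X -> idx Y) (phi' : idx Y -> idx X).
Hypotheses (Hphi : iso_on (a:=X) (b:=Y) full full phi) (Hphi' : iso_on (a:=Y) (b:=X) full full phi').
Hypotheses (Hinv1 : forall x, phi' (phi x) = x) (Hinv2 : forall y, phi (phi' y) = y).
Local Notation stU := (bstart Hu Hneu).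
Local Notation stV := (bstart Hv Hnev).

Lemma is_bstart_iso p : is_bstart p <-> is_bstart (phi p).
Proof.
  apply NNPP. intros Hp0.
  destruct (wf_minimal (wo_wf HXu) (ex_intro (fun p => ~ (is_bstart p <-> is_bstart (phi p))) p Hp0))
    as [p1 [Hp Hm]].
  have Hm' : forall p', ltw p' p1 -> (is_bstart p' <-> is_bstart (phi p')).
  { intros p' Hl'. apply NNPP. exact (Hm p' Hl'). }
  destruct (classic (is_bstart p1)) as [Sp|Sp].
  - apply (bstart_reflect_step HJ HK Hu Hv Hneu Hnev HXu HXv Hdu Hpv Hphi' Hinv1 Hinv2 Sp); [tauto|].
    exact Hm'.
  - apply (bstart_reflect_step HK HJ Hv Hu Hnev Hneu HXv HXu Hdv Hpu Hphi Hinv2 Hinv1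
      (p := phi p1)).
    + tauto.
    + by rewrite Hinv1.
    + intros q' Hq'. have Hl2 : ltw (phi' q') p1.
      { rewrite -(Hinv1 p1). by apply (iso_on_lt Hphi' _ _ I I). }
      rewrite (Hm' _ Hl2) Hinv2. tauto.
Qed.

Lemma block_weq (j : J) (k : K) : (forall a, projT1 (phi (existT _ j a)) = k) ->
  (forall b, projT1 (phi' (existT _ k b)) = j) -> weq (u j) (v k).
Proof.
  intros H1 H2.
  set F := fun a => eq_rect _ (fun k => idx (v k)) (projT2 (phi (existT _ j a))) k (H1 a).
  have EF : forall a, existT (fun k => idx (v k)) k (F a) = phi (existT _ j a).
  { intros a. apply existT_eq_rect. }
  apply (@iso_on_weq _ _ (u j) (v k) F (Hu j) (Hv k)). split; [|split; [|split]].
  - done.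
  - intros b _. set p := phi' (existT _ k b).
    set a := eq_rect _ (fun j => idx (u j)) (projT2 p) j (H2 b).
    have Ea : existT (fun j => idx (u j)) j a = p by apply existT_eq_rect.
    exists a. split; [done|].
    have E2 : existT (fun k => idx (v k)) k (F a) = existT _ k b by rewrite EF Ea /p Hinv2.
    exact (Eqdep.EqdepTheory.inj_pair2 _ _ _ _ _ E2).
  - intros a a' _ _. rewrite -(wprod_lt_same (u:=u) (wo_irr HJ)) -(wprod_lt_same (u:=v) (wo_irr HK)).
    rewrite !EF. exact (iso_on_lt Hphi _ _ I I).
  - intros a _. change (lab (F a)) with (@lab _ _ Y (existT (fun k => idx (v k)) k (F a))).
    rewrite EF. exact (iso_on_lab Hphi _ I).
Qed.

Lemma seq_eq_of_wprod_iso : seq_eq u v.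
Proof.
  have Hc' : forall q, is_bstart q <-> is_bstart (phi' q) by move=> q; rewrite is_bstart_iso Hinv2.
  set f := fun j => projT1 (phi (stU j)).
  set g := fun k => projT1 (phi' (stV k)).
  have Ef : forall j, phi (stU j) = stV (f j).
  { intros j. apply (is_bstart_eq HK Hv Hnev HXv), is_bstart_iso, (is_bstart_bstart HJ). }
  have Eg : forall k, phi' (stV k) = stU (g k).
  { intros k. apply (is_bstart_eq HJ Hu Hneu HXu), Hc', (is_bstart_bstart HK). }
  have gf : forall j, g (f j) = j by move=> j; rewrite /g -Ef Hinv1.
  have fg : forall k, f (g k) = k by move=> k; rewrite /f -Eg Hinv2.
  exists f. split; [split|].
  - by exists g.
  - intros a b. rewrite -(bstart_lt HJ Hu Hneu HXu) -(bstart_lt HK Hv Hnev HXv) -!Ef.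
    exact (iso_on_lt Hphi _ _ I I).
  - intros j. apply block_weq.
    + intros a.
      exact (block_map_const HJ HK Hu Hv Hneu Hnev HXu HXv Hphi' Hinv1 Hinv2 is_bstart_iso a).
    + intros b. rewrite (block_map_const HK HJ Hv Hu Hnev Hneu HXv HXu Hphi Hinv2 Hinv1 Hc' b).
      exact (gf j).
Qed.

End Uniqueness.

Theorem mainTheorem18 (disp : Order.disp_t) (A : finOrderType disp)
  (x : @word disp A) (Hx : is_word x) (Hxc : countable_word x)
  (J : ord) (u : J -> @word disp A) (K : ord) (v : K -> @word disp A) :
  is_ordinal J -> (forall j, is_word (u j)) -> (forall j, prime_word (u j)) ->
  dense_nonincr u -> weq x (wprod u) ->
  is_ordinal K -> (forall k, is_word (v k)) -> (forall k, prime_word (v k)) ->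
  dense_nonincr v -> weq x (wprod v) ->
  seq_eq u v.
Proof.
  intros HJ Hu Hpu Hdu Hxu HK Hv Hpv Hdv Hxv.
  have Hneu j : inhabited (idx (u j)) := prime_word_inhabited (Hu j) (Hpu j).
  have Hnev k : inhabited (idx (v k)) := prime_word_inhabited (Hv k) (Hpv k).
  have HXu := is_word_weq Hxu Hx. have HXv := is_word_weq Hxv Hx.
  destruct (weq_iso_pair (weq_trans (weq_sym Hxu) Hxv)) as [phi [phi' [Hphi [Hphi' [Hi1 Hi2]]]]].
  exact (seq_eq_of_wprod_iso HJ HK Hu Hv Hneu Hnev HXu HXv Hdu Hdv Hpu Hpv Hphi Hphi' Hi1 Hi2).
Qed.
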